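(* Any element $z\in RF(m)$ can be written in the form $$z=\prod_{i=1}^m x_i^{\alpha_i}\prod_{1\le i\le j\le m}[x_j,x_i]^{\beta_{i,j}}\prod_{i=1}^{m-1}\prod_{j=1}^{m-1}[[\omega_{i,j},x_i],x_j]$$ with $\alpha_i,\beta_{i,j}\in\mathbb Z$ and $\omega_{i,j}\in RF(m)$ (products taken in increasing order of the indices, lexicographically for pairs).
   Context: $RF(m)$ is the reduced free group on $x_1,\dots,x_m$: the quotient of the free group by the relations that each $x_i$ commutes with every conjugate of itself. Commutators are $[g,h]=g^{-1}h^{-1}gh$. *)

From Stdlib Require Import List ZArith Arith.
Import ListNotations.

(* A letter is (i, e): generator x_i (0-indexed, i < m) if e = false,
   its inverse x_i^{-1} if e = true. Words are lists of letters, read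
   left to right as products. *)
Definition letter := (nat * bool)%type.
Definition word := list letter.

Definition winv (w : word) : word :=
  rev (map (fun l : letter => (fst l, negb (snd l))) w).

Definition gen (i : nat) : word := [(i, false)].

Definition wcomm (g h : word) : word := winv g ++ winv h ++ g ++ h.

Definition wconj (h g : word) : word := winv g ++ h ++ g.

Fixpoint wrep (n : nat) (w : word) : word :=
  match n with O => [] | S n' => w ++ wrep n' w end.

Definition wpow (w : word) (k : Z) : word :=
  match k with
  | Z0 => []
  | Zpos p => wrep (Pos.to_nat p) w
  | Zneg p => wrep (Pos.to_nat p) (winv w)
  end.

Definition in_RF (m : nat) (w : word) : Prop :=
  Forall (fun l : letter => fst l < m) w.

(* The congruence on words defining RF(m): the smallest congruence
   containing free cancellation and the relations
   [x_i, g^{-1} x_i g] = 1 for every i < m and every word g over the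
   generators (i.e. x_i commutes with every conjugate of itself). *)
Inductive rf_eq (m : nat) : word -> word -> Prop :=
| rf_refl : forall u, rf_eq m u u
| rf_sym : forall u v, rf_eq m u v -> rf_eq m v u
| rf_trans : forall u v w, rf_eq m u v -> rf_eq m v w -> rf_eq m u w
| rf_ctx : forall a b u v, rf_eq m u v -> rf_eq m (a ++ u ++ b) (a ++ v ++ b)
| rf_free : forall i e, rf_eq m [(i, e); (i, negb e)] []
| rf_rel : forall i g, i < m -> in_RF m g ->
    rf_eq m (wcomm (gen i) (wconj (gen i) g)) [].

(* The normal form of the theorem, with 0-indexed generators:
   prod_{i<m} x_i^{alpha i}
   * prod_{i<=j<m, lex order} [x_j, x_i]^{beta i j}
   * prod_{i<m-1} prod_{j<m-1} [[omega i j, x_i], x_j]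
   (paper's indices 1..m correspond to 0..m-1 here). *)
Definition normal_form (m : nat) (alpha : nat -> Z) (beta : nat -> nat -> Z)
  (omega : nat -> nat -> word) : word :=
  flat_map (fun i => wpow (gen i) (alpha i)) (seq 0 m)
  ++ flat_map (fun i => flat_map (fun j => wpow (wcomm (gen j) (gen i)) (beta i j))
                                 (seq i (m - i)))
              (seq 0 m)
  ++ flat_map (fun i => flat_map (fun j => wcomm (wcomm (omega i j) (gen i)) (gen j))
                                 (seq 0 (m - 1)))
              (seq 0 (m - 1)).

(* In RF(m) the normal closure of each generator x_i is abelian. Hence a left-normed commutator of
   letters in which some generator occurs twice is trivial, and RF(m) is nilpotent of class at most m.

   Collecting the letters of z from left to right writes z, modulo gamma_3, as
   prod_i x_i^alpha_i * prod_(i <= j) [x_j, x_i]^beta_ij: moving a letter y to the left past the later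
   generator powers only creates commutators of weight 2, which are in turn moved into the basic
   commutators modulo weight 3.

   The remainder in gamma_3 is absorbed into the factors [[omega_ij, x_i], x_j] weight by weight,
   r = 3, ..., m. Modulo gamma_(r+1), every left-normed commutator of weight r is a product of factors
   [[c, x_i], x_j]^(+-1) with c in gamma_(r-2) and i, j < m-1: a commutator with x_(m-1) among its last
   two letters is first rewritten, as the normal closure of x_(m-1) is abelian, as a product of
   commutators starting with x_(m-1), which are trivial as soon as x_(m-1) recurs. Modulo gamma_(r+1) the map
   c |-> [[c, x_i], x_j] is a homomorphism, so each such factor merges into omega_ij. *)

From Stdlib Require Import List ZArith Arith Lia Setoid Morphisms Bool.
Import ListNotations.

Section WordGroup.
Variable m : nat.
Infix "=~" := (rf_eq m) (at level 70).

Global Instance rf_eq_Equivalence : Equivalence (rf_eq m).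
Proof. constructor; [exact (rf_refl m) | exact (rf_sym m) | exact (rf_trans m)]. Qed.

Global Instance app_rf_Proper : Proper (rf_eq m ==> rf_eq m ==> rf_eq m) (@app letter).
Proof.
  intros a a' Ha b b' Hb. transitivity (a' ++ b).
  - exact (rf_ctx m [] b a a' Ha).
  - pose proof (rf_ctx m a' [] b b' Hb) as H. rewrite !app_nil_r in H. exact H.
Qed.

Lemma winv_app a b : winv (a ++ b) = winv b ++ winv a.
Proof. unfold winv. rewrite map_app, rev_app_distr. reflexivity. Qed.

Lemma winv_involutive a : winv (winv a) = a.
Proof.
  unfold winv. rewrite map_rev, rev_involutive, map_map.
  rewrite <- (map_id a) at 2. apply map_ext. intros [i e]; simpl; rewrite negb_involutive; reflexivity.
Qed.

Lemma winv_nil : winv [] = [].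
Proof. reflexivity. Qed.

Lemma app_winv_r a : a ++ winv a =~ [].
Proof.
  induction a as [|[i e] a IH]; [reflexivity|].
  change (winv ((i, e) :: a)) with (winv a ++ [(i, negb e)]). simpl.
  change ((i, e) :: ?X) with ([(i, e)] ++ X). rewrite (app_assoc a), IH. apply rf_free.
Qed.

Lemma app_winv_l a : winv a ++ a =~ [].
Proof. pose proof (app_winv_r (winv a)) as H. rewrite winv_involutive in H. exact H. Qed.

Global Instance winv_rf_Proper : Proper (rf_eq m ==> rf_eq m) winv.
Proof.
  intros a b H. transitivity (winv a ++ (b ++ winv b)).
  - rewrite app_winv_r, app_nil_r. reflexivity.
  - rewrite app_assoc, <- H at 1. rewrite app_winv_l. reflexivity.
Qed.

Lemma in_RF_app a b : in_RF m a -> in_RF m b -> in_RF m (a ++ b).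
Proof. intros; apply Forall_app; auto. Qed.

Lemma in_RF_nil : in_RF m [].
Proof. constructor. Qed.

Lemma in_RF_winv a : in_RF m a -> in_RF m (winv a).
Proof.
  intro H. apply Forall_rev, Forall_map.
  eapply Forall_impl; [|exact H]. intros [i e]; simpl; auto.
Qed.

Lemma in_RF_single (y : letter) : fst y < m -> in_RF m [y].
Proof. repeat constructor; auto. Qed.

Lemma in_RF_gen i : i < m -> in_RF m (gen i).
Proof. exact (in_RF_single (i, false)). Qed.

Lemma in_RF_wcomm a b : in_RF m a -> in_RF m b -> in_RF m (wcomm a b).
Proof. intros; unfold wcomm; repeat apply in_RF_app; auto using in_RF_winv. Qed.

Lemma in_RF_wrep n a : in_RF m a -> in_RF m (wrep n a).
Proof. induction n; simpl; auto using in_RF_app, in_RF_nil. Qed.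

Lemma in_RF_wpow a k : in_RF m a -> in_RF m (wpow a k).
Proof. destruct k; simpl; auto using in_RF_wrep, in_RF_winv, in_RF_nil. Qed.

End WordGroup.

Inductive wexpr := WNil | WApp (a b : wexpr) | WAtom (k : nat) | WAtomInv (k : nat).

Fixpoint wexpr_eval (env : list word) (t : wexpr) : word :=
  match t with
  | WNil => []
  | WApp a b => wexpr_eval env a ++ wexpr_eval env b
  | WAtom k => nth k env []
  | WAtomInv k => winv (nth k env [])
  end.

Definition atom := (nat * bool)%type.

Fixpoint wexpr_atoms (t : wexpr) : list atom :=
  match t with
  | WNil => []
  | WApp a b => wexpr_atoms a ++ wexpr_atoms b
  | WAtom k => [(k, false)]
  | WAtomInv k => [(k, true)]
  end.

Definition atom_eval (env : list word) (x : atom) : word :=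
  if snd x then winv (nth (fst x) env []) else nth (fst x) env [].

Definition atoms_eval env (l : list atom) : word := flat_map (atom_eval env) l.

Definition push_atom (x : atom) (r : list atom) :=
  match r with
  | y :: r' => if Nat.eqb (fst x) (fst y) && xorb (snd x) (snd y) then r' else x :: r
  | [] => [x]
  end.

Definition free_reduce (l : list atom) := fold_right push_atom [] l.

Fixpoint atoms_eqb (a b : list atom) : bool :=
  match a, b with
  | [], [] => true
  | x :: a', y :: b' => Nat.eqb (fst x) (fst y) && Bool.eqb (snd x) (snd y) && atoms_eqb a' b'
  | _, _ => false
  end.

Lemma atoms_eqb_eq a b : atoms_eqb a b = true -> a = b.
Proof.
  revert b; induction a as [|[k c] a IH]; intros [|[k' c'] b]; simpl; try discriminate; auto.
  rewrite !andb_true_iff. intros [[H1 H2] H3].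
  apply Nat.eqb_eq in H1; apply eqb_prop in H2; subst. f_equal. auto.
Qed.

Lemma atoms_eval_app env a b : atoms_eval env (a ++ b) = atoms_eval env a ++ atoms_eval env b.
Proof. apply flat_map_app. Qed.

Lemma wexpr_eval_atoms env t : wexpr_eval env t = atoms_eval env (wexpr_atoms t).
Proof.
  induction t; simpl; auto.
  - rewrite atoms_eval_app, IHt1, IHt2; reflexivity.
  - unfold atoms_eval, atom_eval; simpl. rewrite app_nil_r; reflexivity.
  - unfold atoms_eval, atom_eval; simpl. rewrite app_nil_r; reflexivity.
Qed.

Section FreeReduction.
Variable m : nat.
Infix "=~" := (rf_eq m) (at level 70).

Lemma push_atom_sound env x r : atoms_eval env (push_atom x r) =~ atom_eval env x ++ atoms_eval env r.
Proof.
  destruct r as [|y r]; simpl.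
  - unfold atoms_eval; simpl; rewrite app_nil_r; reflexivity.
  - destruct (Nat.eqb (fst x) (fst y) && xorb (snd x) (snd y)) eqn:E; [|reflexivity].
    apply andb_true_iff in E as [E1 E2]. apply Nat.eqb_eq in E1.
    destruct x as [k b], y as [k' b']; simpl in *; subst.
    unfold atoms_eval; simpl. rewrite app_assoc.
    destruct b, b'; try discriminate; unfold atom_eval; simpl;
      [rewrite app_winv_l | rewrite app_winv_r]; reflexivity.
Qed.

Lemma free_reduce_sound env l : atoms_eval env (free_reduce l) =~ atoms_eval env l.
Proof.
  induction l as [|x l IH]; simpl; [reflexivity|].
  rewrite push_atom_sound, IH. reflexivity.
Qed.

Lemma free_reduce_eq_sound env t1 t2 :
  atoms_eqb (free_reduce (wexpr_atoms t1)) (free_reduce (wexpr_atoms t2)) = true ->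
  wexpr_eval env t1 =~ wexpr_eval env t2.
Proof.
  intro H. apply atoms_eqb_eq in H.
  rewrite !wexpr_eval_atoms, <- (free_reduce_sound env (wexpr_atoms t1)),
    <- (free_reduce_sound env (wexpr_atoms t2)), H.
  reflexivity.
Qed.

End FreeReduction.

Ltac in_list x l :=
  match l with
  | nil => constr:(false)
  | ?y :: ?l' => constr:(ltac:(first [unify x y; exact true | let r := in_list x l' in exact r]) : bool)
  end.
Ltac add_atom a base oth :=
  let b1 := in_list a base in let b2 := in_list a oth in
  match constr:((b1, b2)) with (false, false) => constr:(a :: oth) | _ => oth end.
Ltac collect_atoms t base oth :=
  match t with
  | ?a ++ ?b => let o1 := collect_atoms a base oth in collect_atoms b base o1
  | @nil _ => oth
  | winv ?a => add_atom a base oth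
  | ?a => add_atom a base oth
  end.
Ltac atom_index a env :=
  match env with
  | ?y :: ?e => constr:(ltac:(first [unify a y; exact O | let n := atom_index a e in exact (S n)]) : nat)
  end.
Ltac list_app l1 l2 :=
  match l1 with nil => l2 | ?x :: ?r => let r' := list_app r l2 in constr:(x :: r') end.
Ltac reify_word t env :=
  match t with
  | ?a ++ ?b => let ra := reify_word a env in let rb := reify_word b env in constr:(WApp ra rb)
  | @nil _ => constr:(WNil)
  | winv ?a => let k := atom_index a env in constr:(WAtomInv k)
  | ?a => let k := atom_index a env in constr:(WAtom k)
  end.
Ltac unfold_words := unfold wcomm, wconj; repeat rewrite ?winv_app, ?winv_involutive, ?winv_nil.

Ltac reify_rf_eq base :=
  match goal with |- rf_eq ?m ?L ?R =>
    let o := collect_atoms L base (@nil word) in let o := collect_atoms R base o in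
    let env := list_app base o in
    let tl := reify_word L env in let tr := reify_word R env in
    change (rf_eq m (wexpr_eval (base ++ o) tl) (wexpr_eval (base ++ o) tr)) end.

Ltac free_group :=
  unfold_words; reify_rf_eq (@nil word); apply free_reduce_eq_sound; vm_compute; reflexivity.

Section NormalClosure.
Variable m : nat.
Infix "=~" := (rf_eq m) (at level 70).

Global Instance wconj_rf_Proper : Proper (rf_eq m ==> rf_eq m ==> rf_eq m) wconj.
Proof. intros a a' H b b' H'. unfold wconj. rewrite H, H'. reflexivity. Qed.

Global Instance wcomm_rf_Proper : Proper (rf_eq m ==> rf_eq m ==> rf_eq m) wcomm.
Proof. intros a a' H b b' H'. unfold wcomm. rewrite H, H'. reflexivity. Qed.

Definition commute a b := a ++ b =~ b ++ a.

Global Instance commute_Proper : Proper (rf_eq m ==> rf_eq m ==> iff) commute.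
Proof. intros a a' H b b' H'. unfold commute. rewrite H, H'. reflexivity. Qed.

Lemma wcomm_nil_commute a b : wcomm a b =~ [] -> commute a b.
Proof.
  intro H. unfold commute. transitivity ((b ++ a) ++ wcomm a b); [free_group|].
  rewrite H, app_nil_r. reflexivity.
Qed.

Lemma commute_wcomm_nil a b : commute a b -> wcomm a b =~ [].
Proof.
  unfold commute; intro H. transitivity (winv a ++ winv b ++ (a ++ b)); [free_group|].
  rewrite H. free_group.
Qed.

Lemma commute_sym a b : commute a b -> commute b a.
Proof. unfold commute; intro; symmetry; auto. Qed.

Lemma commute_winv_l a b : commute a b -> commute (winv a) b.
Proof.
  unfold commute; intro H.
  transitivity (winv a ++ (b ++ a) ++ winv a); [free_group|]. rewrite <- H. free_group.
Qed.

Lemma commute_wconj a b g : commute a b -> commute (wconj a g) (wconj b g).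
Proof.
  unfold commute; intro H.
  transitivity (wconj (a ++ b) g); [free_group|]. rewrite H. free_group.
Qed.

Lemma commute_app_r a b c : commute a b -> commute a c -> commute a (b ++ c).
Proof. unfold commute; intros H1 H2. rewrite app_assoc, H1, <- app_assoc, H2. free_group. Qed.

Lemma commute_app_l a b c : commute a c -> commute b c -> commute (a ++ b) c.
Proof. intros; apply commute_sym, commute_app_r; apply commute_sym; auto. Qed.

Lemma commute_nil_r a : commute a [].
Proof. unfold commute; free_group. Qed.

Lemma wconj_letter_inv i g : wconj [(i, true)] g = winv (wconj (gen i) g).
Proof. unfold wconj. rewrite !winv_app, winv_involutive, app_assoc. reflexivity. Qed.

(* The defining relation, transported by conjugation with [h]: x_i^g and x_i^h commute because
   x_i^(g h^-1) commutes with x_i. *)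
Lemma conj_letters_commute i g h b1 b2 : i < m -> in_RF m g -> in_RF m h ->
  commute (wconj [(i, b1)] g) (wconj [(i, b2)] h).
Proof.
  intros Hi Hg Hh.
  assert (K : commute (wconj (gen i) g) (wconj (gen i) h)).
  { assert (H1 : commute (gen i) (wconj (gen i) (g ++ winv h))).
    { apply wcomm_nil_commute, rf_rel; auto using in_RF_app, in_RF_winv. }
    apply (commute_wconj _ _ h), commute_sym in H1.
    assert (E : wconj (wconj (gen i) (g ++ winv h)) h =~ wconj (gen i) g) by free_group.
    rewrite E in H1. exact H1. }
  destruct b1, b2; rewrite ?wconj_letter_inv.
  - apply commute_winv_l, commute_sym, commute_winv_l, commute_sym, K.
  - apply commute_winv_l, K.
  - apply commute_sym, commute_winv_l, commute_sym, K.
  - exact K.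
Qed.

Definition letter_conjs i (L : list (bool * word)) :=
  flat_map (fun p => wconj [(i, fst p)] (snd p)) L.

Definition conjugators_in_RF (L : list (bool * word)) := Forall (fun p => in_RF m (snd p)) L.

Definition in_ncl i w := i < m /\ exists L, conjugators_in_RF L /\ w =~ letter_conjs i L.

Lemma letter_conjs_app i a b : letter_conjs i (a ++ b) = letter_conjs i a ++ letter_conjs i b.
Proof. apply flat_map_app. Qed.

Lemma letter_conjs_commute i L1 L2 : i < m -> conjugators_in_RF L1 -> conjugators_in_RF L2 ->
  commute (letter_conjs i L1) (letter_conjs i L2).
Proof.
  intros Hi H1 H2. induction H1 as [|[b g] L1 Hg H1 IH]; simpl.
  - unfold commute; free_group.
  - apply commute_app_l; auto. clear IH H1.
    induction H2 as [|[b' h] L2 Hh H2 IH2]; simpl.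
    + apply commute_nil_r.
    + apply commute_app_r; auto. apply conj_letters_commute; auto.
Qed.

Lemma in_ncl_commute i a b : in_ncl i a -> in_ncl i b -> commute a b.
Proof.
  intros [Hi [L1 [H1 E1]]] [_ [L2 [H2 E2]]]. unfold commute.
  rewrite E1, E2. apply letter_conjs_commute; auto.
Qed.

Global Instance in_ncl_Proper i : Proper (rf_eq m ==> iff) (in_ncl i).
Proof.
  intros a b H. unfold in_ncl.
  split; intros [Hi [L [HL E]]]; split; auto; exists L; split; auto; [rewrite <- H | rewrite H]; auto.
Qed.

Lemma in_ncl_nil i : i < m -> in_ncl i [].
Proof. intro; split; auto; exists []; split; [constructor | reflexivity]. Qed.

Lemma in_ncl_app i a b : in_ncl i a -> in_ncl i b -> in_ncl i (a ++ b).
Proof.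
  intros [Hi [L1 [H1 E1]]] [_ [L2 [H2 E2]]]. split; auto. exists (L1 ++ L2).
  split; [apply Forall_app; auto|]. rewrite letter_conjs_app, E1, E2. reflexivity.
Qed.

Lemma in_ncl_letter i b : i < m -> in_ncl i [(i, b)].
Proof. intro; split; auto. exists [(b, [])]. split; [repeat constructor|]. reflexivity. Qed.

Lemma in_ncl_gen i : i < m -> in_ncl i (gen i).
Proof. apply in_ncl_letter. Qed.

Lemma letter_conjs_winv i L :
  winv (letter_conjs i L) =~ letter_conjs i (rev (map (fun p => (negb (fst p), snd p)) L)).
Proof.
  induction L as [|[b g] L IH]; simpl; [reflexivity|].
  rewrite winv_app, IH, letter_conjs_app. simpl. rewrite app_nil_r. apply app_rf_Proper; [reflexivity|].
  unfold wconj. rewrite !winv_app, winv_involutive, <- !app_assoc. reflexivity.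
Qed.

Lemma in_ncl_winv i a : in_ncl i a -> in_ncl i (winv a).
Proof.
  intros [Hi [L [H E]]]. split; auto. eexists; split; [|rewrite E; apply letter_conjs_winv].
  apply Forall_rev, Forall_map. eapply Forall_impl; [|exact H]. simpl; auto.
Qed.

Lemma letter_conjs_wconj i L g :
  wconj (letter_conjs i L) g =~ letter_conjs i (map (fun p => (fst p, snd p ++ g)) L).
Proof.
  induction L as [|[b h] L IH]; simpl.
  - apply app_winv_l.
  - rewrite <- IH. free_group.
Qed.

Lemma in_ncl_wconj i a g : in_ncl i a -> in_RF m g -> in_ncl i (wconj a g).
Proof.
  intros [Hi [L [H E]]] Hg. split; auto. eexists; split; [|rewrite E; apply letter_conjs_wconj].
  apply Forall_map. eapply Forall_impl; [|exact H]. simpl; intros; apply in_RF_app; auto.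
Qed.

Lemma in_ncl_wcomm_l i a g : in_ncl i a -> in_RF m g -> in_ncl i (wcomm a g).
Proof.
  intros Ha Hg. assert (E : wcomm a g =~ winv a ++ wconj a g) by free_group.
  rewrite E. apply in_ncl_app; [apply in_ncl_winv | apply in_ncl_wconj]; auto.
Qed.

Lemma in_ncl_wcomm_letter i a b : i < m -> in_RF m a -> in_ncl i (wcomm a [(i, b)]).
Proof.
  intros Hi Ha.
  assert (E : wcomm a [(i, b)] = wconj [(i, negb b)] a ++ [(i, b)]).
  { unfold wcomm, wconj. rewrite <- !app_assoc. reflexivity. }
  rewrite E. apply in_ncl_app; [apply in_ncl_wconj; auto|]; apply in_ncl_letter; auto.
Qed.

End NormalClosure.

(* [(b, k, P)] stands for the conjugate [P x P^-1] of the atom [x = (k, b)] by the atom word [P]. *)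
Definition conj_entry := (bool * nat * list atom)%type.

Fixpoint split_conjugates (nb : nat) (P : list atom) (l : list atom) : list conj_entry * list atom :=
  match l with
  | [] => ([], P)
  | x :: l' =>
      if fst x <? nb then let r := split_conjugates nb P l' in ((snd x, fst x, P) :: fst r, snd r)
      else split_conjugates nb (P ++ [x]) l'
  end.

Definition entry_inv (e : conj_entry) : conj_entry := (negb (fst (fst e)), snd (fst e), snd e).
Definition entry_reduce (e : conj_entry) : conj_entry := (fst e, free_reduce (snd e)).
Definition entry_eqb (a b : conj_entry) : bool :=
  Bool.eqb (fst (fst a)) (fst (fst b)) && Nat.eqb (snd (fst a)) (snd (fst b)) && atoms_eqb (snd a) (snd b).

Lemma entry_eqb_eq a b : entry_eqb a b = true -> a = b.
Proof.
  destruct a as [[b1 k1] P1], b as [[b2 k2] P2]. unfold entry_eqb; simpl.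
  rewrite !andb_true_iff. intros [[H1 H2] H3].
  apply eqb_prop in H1; apply Nat.eqb_eq in H2; apply atoms_eqb_eq in H3; subst; reflexivity.
Qed.

Fixpoint remove_entry (y : conj_entry) (l : list conj_entry) : option (list conj_entry) :=
  match l with
  | [] => None
  | x :: l' =>
      if entry_eqb y x then Some l'
      else match remove_entry y l' with Some r => Some (x :: r) | None => None end
  end.

Lemma remove_entry_spec y l l' :
  remove_entry y l = Some l' -> exists l1 l2, l = l1 ++ y :: l2 /\ l' = l1 ++ l2.
Proof.
  revert l'; induction l as [|x l IH]; simpl; intros l' H; [discriminate|].
  destruct (entry_eqb y x) eqn:E.
  - apply entry_eqb_eq in E; subst. injection H as <-. exists [], l; auto.
  - destruct (remove_entry y l) as [r|] eqn:R; [|discriminate]. injection H as <-.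
    destruct (IH r eq_refl) as [l1 [l2 [-> ->]]]. exists (x :: l1), l2; auto.
Qed.

Fixpoint entries_cancel (fuel : nat) (l : list conj_entry) : bool :=
  match l, fuel with
  | [], _ => true
  | x :: t, S fuel' =>
      match remove_entry (entry_inv x) t with Some t' => entries_cancel fuel' t' | None => false end
  | _ :: _, 0 => false
  end.

Definition ncl_check nb t1 t2 :=
  let r1 := split_conjugates nb [] (wexpr_atoms t1) in
  let r2 := split_conjugates nb [] (wexpr_atoms t2) in
  let l := map entry_reduce (fst r1 ++ map entry_inv (rev (fst r2))) in
  entries_cancel (length l) l && atoms_eqb (free_reduce (snd r1)) (free_reduce (snd r2)).

Definition entry_eval env (e : conj_entry) : word :=
  atoms_eval env (snd e) ++ atom_eval env (snd (fst e), fst (fst e)) ++ winv (atoms_eval env (snd e)).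

Lemma split_conjugates_entries nb P l : Forall (fun x => nb <= fst x) P ->
  Forall (fun e => snd (fst e) < nb /\ Forall (fun x => nb <= fst x) (snd e))
    (fst (split_conjugates nb P l)).
Proof.
  revert P; induction l as [|x l IH]; intros P HP; simpl; [constructor|].
  destruct (fst x <? nb) eqn:E; simpl.
  - constructor; auto. split; auto. apply Nat.ltb_lt; auto.
  - apply IH, Forall_app. split; auto. constructor; auto. apply Nat.ltb_ge; auto.
Qed.

Lemma push_atom_Forall (Q : atom -> Prop) x r : Q x -> Forall Q r -> Forall Q (push_atom x r).
Proof.
  intros Hx Hr. destruct r as [|y r]; simpl; [repeat constructor; auto|].
  destruct (_ && _); [inversion Hr; auto | constructor; auto].
Qed.

Lemma free_reduce_Forall (Q : atom -> Prop) l : Forall Q l -> Forall Q (free_reduce l).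
Proof. induction 1; simpl; [constructor | apply push_atom_Forall; auto]. Qed.

Section NclCheck.
Variable m : nat.
Infix "=~" := (rf_eq m) (at level 70).

Lemma split_conjugates_sound env nb P l :
  atoms_eval env P ++ atoms_eval env l =~
  flat_map (entry_eval env) (fst (split_conjugates nb P l)) ++ atoms_eval env (snd (split_conjugates nb P l)).
Proof.
  revert P; induction l as [|x l IH]; intro P; simpl.
  - unfold atoms_eval at 2; simpl. rewrite app_nil_r. reflexivity.
  - destruct (fst x <? nb); simpl.
    + rewrite <- app_assoc, <- IH. unfold entry_eval. destruct x as [k b]; simpl.
      unfold atoms_eval at 2; simpl. fold (atoms_eval env l).
      rewrite <- !app_assoc, (app_assoc (winv _)), app_winv_l. reflexivity.
    + rewrite <- IH, atoms_eval_app, <- app_assoc. unfold atoms_eval at 3 4; simpl.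
      rewrite app_nil_r. reflexivity.
Qed.

Lemma entry_eval_in_ncl env nb i e :
  (forall k, k < nb -> in_ncl m i (nth k env [])) -> (forall k, nb <= k -> in_RF m (nth k env [])) ->
  snd (fst e) < nb -> Forall (fun x => nb <= fst x) (snd e) -> in_ncl m i (entry_eval env e).
Proof.
  destruct e as [[b k] P]; simpl. intros Hb Hf Hk HP.
  assert (HR : in_RF m (atoms_eval env P)).
  { clear Hk. induction HP as [|[k' b'] P Hk HP IH]; [apply in_RF_nil|].
    apply in_RF_app; auto. unfold atom_eval; simpl. destruct b'; auto using in_RF_winv. }
  unfold entry_eval; simpl. rewrite <- (winv_involutive (atoms_eval env P)) at 1.
  apply in_ncl_wconj; [|apply in_RF_winv; auto].
  unfold atom_eval; simpl. destruct b; auto using in_ncl_winv.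
Qed.

Lemma entry_eval_inv env x : entry_eval env x ++ entry_eval env (entry_inv x) =~ [].
Proof. destruct x as [[[|] k] P]; unfold entry_eval, atom_eval; simpl; free_group. Qed.

Lemma entries_cancel_sound env i n l : Forall (fun e => in_ncl m i (entry_eval env e)) l ->
  entries_cancel n l = true -> flat_map (entry_eval env) l =~ [].
Proof.
  revert l; induction n as [|n IH]; intros [|x t] Hl Hc; simpl in *; try discriminate; try reflexivity.
  destruct (remove_entry (entry_inv x) t) as [t'|] eqn:R; [|discriminate].
  destruct (remove_entry_spec _ _ _ R) as [l1 [l2 [-> ->]]].
  inversion Hl as [|? ? Hx Ht]; subst.
  apply Forall_app in Ht as [H1 H2]. inversion H2 as [|? ? Ho H2']; subst.
  assert (C : commute m (entry_eval env x) (flat_map (entry_eval env) l1)).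
  { clear - Hx H1. induction H1; simpl; [apply commute_nil_r|].
    apply commute_app_r; auto. apply in_ncl_commute with i; auto. }
  unfold commute in C. rewrite flat_map_app. simpl.
  rewrite app_assoc, C, <- app_assoc, (app_assoc (entry_eval env x)), entry_eval_inv. simpl.
  rewrite <- flat_map_app. apply IH; auto. apply Forall_app; auto.
Qed.

Lemma entries_inv_rev env l :
  flat_map (entry_eval env) (map entry_inv (rev l)) =~ winv (flat_map (entry_eval env) l).
Proof.
  induction l as [|x l IH]; simpl; [reflexivity|].
  rewrite map_app, flat_map_app, IH, winv_app. simpl. rewrite app_nil_r.
  apply app_rf_Proper; [reflexivity|].
  destruct x as [[[|] k] P]; unfold entry_eval, entry_inv, atom_eval; simpl; free_group.
Qed.

Lemma entries_reduce env l : flat_map (entry_eval env) (map entry_reduce l) =~ flat_map (entry_eval env) l.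
Proof.
  induction l as [|x l IH]; simpl; [reflexivity|].
  rewrite IH. unfold entry_eval, entry_reduce; simpl. rewrite free_reduce_sound. reflexivity.
Qed.

Lemma ncl_check_sound (base others : list word) i t1 t2 :
  Forall (in_ncl m i) base -> Forall (in_RF m) others -> ncl_check (length base) t1 t2 = true ->
  wexpr_eval (base ++ others) t1 =~ wexpr_eval (base ++ others) t2.
Proof.
  intros Hb Ho Hc. set (env := base ++ others). set (nb := length base).
  assert (HB : forall k, k < nb -> in_ncl m i (nth k env [])).
  { intros k Hk. unfold env. rewrite app_nth1 by auto. apply (proj1 (Forall_nth _ _) Hb); auto. }
  assert (HF : forall k, nb <= k -> in_RF m (nth k env [])).
  { intros k Hk. unfold env. rewrite app_nth2 by auto.
    destruct (lt_dec (k - nb) (length others)).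
    - apply (proj1 (Forall_nth _ _) Ho); auto.
    - rewrite nth_overflow by lia. apply in_RF_nil. }
  unfold ncl_check in Hc. fold nb in Hc.
  apply andb_true_iff in Hc as [Hc Hu]. apply atoms_eqb_eq in Hu.
  rewrite !wexpr_eval_atoms.
  pose proof (split_conjugates_sound env nb [] (wexpr_atoms t1)) as S1.
  pose proof (split_conjugates_sound env nb [] (wexpr_atoms t2)) as S2.
  pose proof (split_conjugates_entries nb [] (wexpr_atoms t1) (Forall_nil _)) as P1.
  pose proof (split_conjugates_entries nb [] (wexpr_atoms t2) (Forall_nil _)) as P2.
  simpl in S1, S2. rewrite S1, S2, <- (free_reduce_sound m env (snd _)), Hu, free_reduce_sound.
  apply app_rf_Proper; [|reflexivity].
  set (f1 := fst (split_conjugates nb [] (wexpr_atoms t1))) in *.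
  set (f2 := fst (split_conjugates nb [] (wexpr_atoms t2))) in *.
  assert (Hall : Forall (fun e => in_ncl m i (entry_eval env e))
                        (map entry_reduce (f1 ++ map entry_inv (rev f2)))).
  { apply Forall_map, Forall_app; split; [|apply Forall_map, Forall_rev];
      eapply Forall_impl; try eassumption; intros e [Hk HP];
      apply entry_eval_in_ncl with nb; auto; apply free_reduce_Forall; auto. }
  pose proof (entries_cancel_sound env i _ _ Hall Hc) as Z.
  rewrite entries_reduce, flat_map_app, entries_inv_rev in Z.
  transitivity ((flat_map (entry_eval env) f1 ++ winv (flat_map (entry_eval env) f2))
                  ++ flat_map (entry_eval env) f2); [|rewrite Z; reflexivity].
  rewrite <- app_assoc, app_winv_l, app_nil_r. reflexivity.
Qed.

End NclCheck.

Create HintDb rf_words.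
Global Hint Resolve in_RF_app in_RF_nil in_RF_winv in_RF_gen in_RF_single in_RF_wcomm in_RF_wpow : rf_words.
Global Hint Resolve in_ncl_gen in_ncl_letter in_ncl_winv in_ncl_app in_ncl_nil : rf_words.
Global Hint Extern 1 (_ < _) => (simpl; lia) : rf_words.

Ltac Forall_by_hyps :=
  match goal with
  | |- Forall _ [] => apply Forall_nil
  | |- Forall _ (_ :: _) =>
      apply Forall_cons; [first [assumption | solve [auto with rf_words]] | Forall_by_hyps]
  end.

(* A word in atoms is a product of conjugates of the [base] atoms followed by its other atoms.
   When the [base] atoms lie in the abelian normal subgroup [in_ncl m i], an identity holds as
   soon as these conjugates cancel in pairs and the remaining parts are freely equal. *)
Ltac ncl_group i base :=
  unfold_words; reify_rf_eq base;
  apply (ncl_check_sound _ base _ i); [Forall_by_hyps | Forall_by_hyps | vm_compute; reflexivity].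

Definition lcomm_step (acc : word) (y : letter) := wcomm acc [y].

Definition lcomm (s : list letter) : word :=
  match s with [] => [] | a :: ys => fold_left lcomm_step ys [a] end.

Definition winv_if (b : bool) (w : word) := if b then winv w else w.

Definition lcomm_prod (L : list (bool * list letter)) :=
  flat_map (fun p => winv_if (fst p) (lcomm (snd p))) L.

Lemma lcomm_app s t : s <> [] -> lcomm (s ++ t) = fold_left lcomm_step t (lcomm s).
Proof. destruct s; [congruence|]. intros _. apply fold_left_app. Qed.

Lemma lcomm_snoc s y : s <> [] -> lcomm (s ++ [y]) = wcomm (lcomm s) [y].
Proof. intro H. rewrite lcomm_app by auto. reflexivity. Qed.

Lemma lcomm_prod_app a b : lcomm_prod (a ++ b) = lcomm_prod a ++ lcomm_prod b.
Proof. apply flat_map_app. Qed.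

Lemma wcomm_swap a b : wcomm a b = winv (wcomm b a).
Proof. unfold wcomm. rewrite !winv_app, !winv_involutive, <- !app_assoc. reflexivity. Qed.

Section LowerCentralSeries.
Variable m : nat.
Infix "=~" := (rf_eq m) (at level 70).

Global Instance winv_if_Proper b : Proper (rf_eq m ==> rf_eq m) (winv_if b).
Proof. intros x y H; destruct b; simpl; rewrite H; reflexivity. Qed.

Lemma in_RF_fold_lcomm_step s acc : in_RF m s -> in_RF m acc -> in_RF m (fold_left lcomm_step s acc).
Proof.
  revert acc; induction s as [|y s IH]; intros acc Hs Ha; simpl; auto.
  inversion Hs; subst. apply IH; auto. apply in_RF_wcomm; auto. repeat constructor; auto.
Qed.

Lemma in_RF_lcomm s : in_RF m s -> in_RF m (lcomm s).
Proof.
  destruct s as [|a s]; simpl; intro H; [apply in_RF_nil|]. inversion H; subst.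
  apply in_RF_fold_lcomm_step; auto. repeat constructor; auto.
Qed.

Lemma in_RF_winv_if b w : in_RF m w -> in_RF m (winv_if b w).
Proof. destruct b; simpl; auto using in_RF_winv. Qed.

Lemma lcomm_prod_winv L :
  winv (lcomm_prod L) =~ lcomm_prod (rev (map (fun p => (negb (fst p), snd p)) L)).
Proof.
  induction L as [|[b s] L IH]; [reflexivity|].
  simpl. rewrite lcomm_prod_app, winv_app, IH. apply app_rf_Proper; [reflexivity|].
  unfold lcomm_prod; simpl. rewrite app_nil_r. destruct b; simpl; rewrite ?winv_involutive; reflexivity.
Qed.

Definition lcomm_terms r (L : list (bool * list letter)) :=
  Forall (fun p => r <= length (snd p) /\ in_RF m (snd p)) L.

Definition in_gamma r w := exists L, lcomm_terms r L /\ w =~ lcomm_prod L.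

Lemma in_RF_lcomm_prod r L : lcomm_terms r L -> in_RF m (lcomm_prod L).
Proof.
  induction 1 as [|[b s] L [_ Hs] _ IH]; simpl; [apply in_RF_nil|].
  apply in_RF_app; auto. apply in_RF_winv_if, in_RF_lcomm; auto.
Qed.

Global Instance in_gamma_Proper r : Proper (rf_eq m ==> iff) (in_gamma r).
Proof.
  intros a b H; unfold in_gamma.
  split; intros [L [HL E]]; exists L; split; auto; [rewrite <- H | rewrite H]; auto.
Qed.

Lemma in_gamma_nil r : in_gamma r [].
Proof. exists []; split; [constructor | reflexivity]. Qed.

Lemma in_gamma_app r a b : in_gamma r a -> in_gamma r b -> in_gamma r (a ++ b).
Proof.
  intros [L1 [H1 E1]] [L2 [H2 E2]]. exists (L1 ++ L2); split; [apply Forall_app; auto|].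
  rewrite lcomm_prod_app, E1, E2; reflexivity.
Qed.

Lemma in_gamma_winv r a : in_gamma r a -> in_gamma r (winv a).
Proof.
  intros [L [H E]]. exists (rev (map (fun p => (negb (fst p), snd p)) L)). split.
  - apply Forall_rev, Forall_map. eapply Forall_impl; [|exact H]. simpl; auto.
  - rewrite E. apply lcomm_prod_winv.
Qed.

Lemma in_gamma_winv_if r b a : in_gamma r a -> in_gamma r (winv_if b a).
Proof. destruct b; simpl; auto using in_gamma_winv. Qed.

Lemma in_gamma_weaken r r' a : r' <= r -> in_gamma r a -> in_gamma r' a.
Proof.
  intros Hr [L [H E]]. exists L; split; auto.
  eapply Forall_impl; [|exact H]. simpl; intros p [H1 H2]; split; auto; lia.
Qed.

Lemma in_gamma_lcomm r s : r <= length s -> in_RF m s -> in_gamma r (lcomm s).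
Proof.
  intros. exists [(false, s)]. split; [repeat constructor; auto|].
  unfold lcomm_prod; simpl. rewrite app_nil_r; reflexivity.
Qed.

Lemma lcomm_wconj_letter r s y : r <= length s -> in_RF m s -> fst y < m ->
  exists e, in_gamma (S r) e /\ wconj (lcomm s) [y] =~ lcomm s ++ e.
Proof.
  intros Hr Hs Hy. destruct s as [|a s'].
  - exists []. split; [apply in_gamma_nil | simpl; free_group].
  - exists (lcomm ((a :: s') ++ [y])). split.
    + apply in_gamma_lcomm; [rewrite length_app; simpl in *; lia|].
      apply in_RF_app; [exact Hs | repeat constructor; exact Hy].
    + rewrite lcomm_snoc by congruence. free_group.
Qed.

Lemma in_gamma_wconj_letter r a y : in_gamma r a -> fst y < m -> in_gamma r (wconj a [y]).
Proof.
  intros [L [HL E]] Hy. rewrite E. clear a E.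
  induction HL as [|[b s] L [Hr Hs] HL IH]; simpl.
  - assert (E : wconj [] [y] =~ []) by free_group. simpl; rewrite E. apply in_gamma_nil.
  - destruct (lcomm_wconj_letter r s y Hr Hs Hy) as [e1 [He1 E1]].
    assert (EQ : wconj (winv_if b (lcomm s) ++ lcomm_prod L) [y]
                 =~ winv_if b (wconj (lcomm s) [y]) ++ wconj (lcomm_prod L) [y])
      by (destruct b; unfold winv_if; free_group).
    rewrite EQ. apply in_gamma_app; auto. apply in_gamma_winv_if. rewrite E1.
    apply in_gamma_app; [apply in_gamma_lcomm; auto|]. apply in_gamma_weaken with (S r); auto.
Qed.

Lemma in_gamma_wconj r a g : in_gamma r a -> in_RF m g -> in_gamma r (wconj a g).
Proof.
  revert a; induction g as [|y g IH]; intros a Ha Hg.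
  - unfold wconj; simpl. rewrite app_nil_r. auto.
  - inversion Hg; subst.
    assert (E : wconj a (y :: g) =~ wconj (wconj a [y]) g) by (change (y :: g) with ([y] ++ g); free_group).
    rewrite E. apply IH; auto. apply in_gamma_wconj_letter; auto.
Qed.

Lemma lcomm_prod_wconj_letter r L y : lcomm_terms r L -> fst y < m ->
  exists e, in_gamma (S r) e /\ wconj (lcomm_prod L) [y] =~ lcomm_prod L ++ e.
Proof.
  intros HL Hy. induction HL as [|[b s] L [Hr Hs] HL IH].
  - exists []; split; [apply in_gamma_nil | simpl; free_group].
  - change (lcomm_prod ((b, s) :: L)) with (winv_if b (lcomm s) ++ lcomm_prod L).
    destruct IH as [e2 [He2 E2]].
    destruct (lcomm_wconj_letter r s y Hr Hs Hy) as [e1 [He1 E1]].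
    assert (HQ : in_RF m (lcomm_prod L)) by (eapply in_RF_lcomm_prod; eauto).
    assert (Ht : in_RF m (lcomm s)) by (apply in_RF_lcomm; auto).
    set (t := lcomm s) in *. set (q := lcomm_prod L) in *.
    assert (EQ : wconj (winv_if b t ++ q) [y] =~ wconj (winv_if b t) [y] ++ wconj q [y]) by free_group.
    destruct b; unfold winv_if in *.
    + exists (wconj (wconj (winv e1) (winv t)) q ++ e2). split.
      * apply in_gamma_app; auto. apply in_gamma_wconj; auto using in_RF_winv.
        apply in_gamma_wconj; auto using in_gamma_winv, in_RF_winv.
      * assert (EQ2 : wconj (winv t) [y] =~ winv (wconj t [y])) by free_group.
        rewrite EQ, E2, EQ2, E1. free_group.
    + exists (wconj e1 q ++ e2). split; [apply in_gamma_app; auto; apply in_gamma_wconj; auto|].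
      rewrite EQ, E2, E1. free_group.
Qed.

Lemma in_gamma_wconj_split r a g : in_gamma r a -> in_RF m g ->
  exists e, in_gamma (S r) e /\ wconj a g =~ a ++ e.
Proof.
  revert a; induction g as [|y g IH]; intros a Ha Hg.
  - exists []; split; [apply in_gamma_nil|]. unfold wconj; simpl. rewrite !app_nil_r. reflexivity.
  - inversion Hg as [|? ? Hy Hg']; subst.
    destruct Ha as [L [HL EL]].
    destruct (lcomm_prod_wconj_letter r L y HL Hy) as [e1 [He1 E1]]. rewrite <- EL in E1.
    destruct (IH a (ex_intro _ L (conj HL EL)) Hg') as [e2 [He2 E2]].
    assert (E : wconj a (y :: g) =~ wconj (wconj a [y]) g) by (change (y :: g) with ([y] ++ g); free_group).
    exists (e2 ++ wconj e1 g). split; [apply in_gamma_app; auto; apply in_gamma_wconj; auto|].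
    rewrite E, E1. rewrite app_assoc, <- E2. free_group.
Qed.

Lemma in_gamma_wcomm_l r a g : in_gamma r a -> in_RF m g -> in_gamma (S r) (wcomm a g).
Proof.
  intros Ha Hg. destruct (in_gamma_wconj_split r a g Ha Hg) as [e [He E]].
  assert (E2 : wcomm a g =~ winv a ++ wconj a g) by free_group.
  rewrite E2, E, app_assoc, app_winv_l. exact He.
Qed.

Lemma in_gamma_wcomm_r r a g : in_gamma r a -> in_RF m g -> in_gamma (S r) (wcomm g a).
Proof. intros Ha Hg. rewrite wcomm_swap. apply in_gamma_winv, in_gamma_wcomm_l; auto. Qed.

End LowerCentralSeries.

Section Nilpotency.
Variable m : nat.
Infix "=~" := (rf_eq m) (at level 70).

Lemma fold_lcomm_step_in_ncl t acc i : i < m -> in_RF m acc -> in_RF m t ->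
  (in_ncl m i acc \/ exists y, In y t /\ fst y = i) -> in_ncl m i (fold_left lcomm_step t acc).
Proof.
  revert acc; induction t as [|y t IH]; intros acc Hi Ha Ht H; simpl.
  - destruct H as [H | [y [[] _]]]; auto.
  - inversion Ht; subst. apply IH; auto.
    + apply in_RF_wcomm; auto with rf_words.
    + destruct H as [H | [y' [[<- | Hy'] Hf]]].
      * left. apply in_ncl_wcomm_l; auto with rf_words.
      * left. destruct y as [k b]; simpl in *; subst. apply in_ncl_wcomm_letter; auto.
      * right. exists y'; auto.
Qed.

Lemma lcomm_in_ncl s y : in_RF m s -> In y s -> in_ncl m (fst y) (lcomm s).
Proof.
  destruct s as [|a t]; [intros _ []|]. intros Hs Hy. inversion Hs; subst. simpl.
  apply fold_lcomm_step_in_ncl; auto with rf_words.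
  - apply (proj1 (Forall_forall _ _) Hs); auto.
  - destruct Hy as [<- | Hy].
    + left. destruct a as [k b]; apply in_ncl_letter; auto.
    + right. exists y; auto.
Qed.

Lemma fold_lcomm_step_trivial t acc : acc =~ [] -> fold_left lcomm_step t acc =~ [].
Proof.
  revert acc; induction t as [|y t IH]; intros acc H; simpl; auto.
  apply IH. unfold lcomm_step. rewrite H. free_group.
Qed.

(* Once the generator of [y1] has occurred, the commutator lies in the abelian group [in_ncl m (fst y1)],
   which contains the later letter [y2]. *)
Lemma lcomm_repeat_trivial s1 y1 s2 y2 s3 : in_RF m (s1 ++ y1 :: s2 ++ y2 :: s3) -> fst y1 = fst y2 ->
  lcomm (s1 ++ y1 :: s2 ++ y2 :: s3) =~ [].
Proof.
  intros Hs Hf.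
  replace (s1 ++ y1 :: s2 ++ y2 :: s3) with ((s1 ++ y1 :: s2) ++ y2 :: s3) in *
    by (rewrite <- app_assoc; reflexivity).
  rewrite lcomm_app by (destruct s1; discriminate). simpl.
  apply fold_lcomm_step_trivial, commute_wcomm_nil.
  apply Forall_app in Hs as [H1 H2]. inversion H2; subst.
  apply in_ncl_commute with (fst y1).
  - apply lcomm_in_ncl; auto. apply in_or_app; right; left; auto.
  - rewrite Hf. destruct y2 as [k b]. apply in_ncl_letter; auto.
Qed.

Lemma not_NoDup_split (s : list letter) : ~ NoDup (map fst s) ->
  exists s1 y1 s2 y2 s3, s = s1 ++ y1 :: s2 ++ y2 :: s3 /\ fst y1 = fst y2.
Proof.
  induction s as [|y t IH]; simpl; intro H; [exfalso; apply H; constructor|].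
  destruct (in_dec Nat.eq_dec (fst y) (map fst t)) as [Hin | Hn].
  - apply in_map_iff in Hin as [y2 [Hf Hy2]]. apply in_split in Hy2 as [s2 [s3 ->]].
    exists [], y, s2, y2, s3. auto.
  - destruct IH as [s1 [y1 [s2 [y2 [s3 [-> Hf]]]]]].
    + intro Hd. apply H. constructor; auto.
    + exists (y :: s1), y1, s2, y2, s3. auto.
Qed.

Lemma lcomm_long_trivial s : in_RF m s -> m < length s -> lcomm s =~ [].
Proof.
  intros Hs Hl.
  assert (ND : ~ NoDup (map fst s)).
  { intro Hd. apply (NoDup_incl_length (l' := seq 0 m)) in Hd.
    - rewrite length_map, length_seq in Hd. unfold letter in *; lia.
    - intros x Hx. apply in_map_iff in Hx as [y [<- Hy]]. apply in_seq.
      pose proof (proj1 (Forall_forall _ _) Hs y Hy) as Hy'. simpl in Hy'. lia. }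
  destruct (not_NoDup_split s ND) as [s1 [y1 [s2 [y2 [s3 [-> Hf]]]]]].
  apply lcomm_repeat_trivial; auto.
Qed.

Lemma in_gamma_nilpotent a : in_gamma m (S m) a -> a =~ [].
Proof.
  intros [L [HL E]]. rewrite E. clear E.
  induction HL as [|[b s] L [Hr Hs] HL IH]; simpl; [reflexivity|].
  rewrite IH, app_nil_r. simpl in *. rewrite lcomm_long_trivial by (auto; lia). destruct b; reflexivity.
Qed.

End Nilpotency.

Section LeadingGenerator.
Variable m : nat.
Infix "=~" := (rf_eq m) (at level 70).

(* Valid because [u], and hence its conjugate [u'], lies in the abelian normal subgroup [in_ncl m i]. *)
Lemma wcomm_ncl_wcomm i u V Y : in_ncl m i u -> in_RF m V -> in_RF m Y ->
  let u' := wconj u (winv V ++ winv Y) in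
  wcomm u (wcomm V Y) =~ wcomm (wcomm u' V) Y ++ winv (wcomm (wcomm u' Y) V).
Proof. intros Hu HV HY u'. unfold u'. ncl_group i [u]. Qed.

Lemma wcomm_ncl_wcomm_split i w V Y : in_ncl m i w -> in_RF m V -> in_RF m Y ->
  let d := wcomm w (winv V ++ winv Y) in
  wcomm w (wcomm V Y) =~ wcomm (wcomm w V) Y ++ wcomm (wcomm d V) Y
                         ++ winv (wcomm (wcomm w Y) V) ++ winv (wcomm (wcomm d Y) V).
Proof. intros Hw HV HY d. unfold d. ncl_group i [w]. Qed.

Lemma in_gamma_wcomm_lcomm i v : v <> [] -> in_RF m v -> forall a u,
  in_ncl m i u -> in_gamma m a u -> in_gamma m (a + length v) (wcomm u (lcomm v)).
Proof.
  induction v as [|y v0 IH] using rev_ind; [congruence|]. intros _ Hv a u Hu Hq.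
  apply Forall_app in Hv as [Hv0 Hy]. inversion Hy as [|? ? Hy1 _]; subst.
  assert (HY : in_RF m [y]) by auto with rf_words.
  destruct v0 as [|z v0'].
  - simpl. replace (a + 1) with (S a) by lia. apply in_gamma_wcomm_l; auto.
  - set (v0 := z :: v0') in *. assert (Hne : v0 <> []) by (unfold v0; congruence).
    rewrite lcomm_snoc, length_app by auto. change (length [y]) with 1.
    assert (HV : in_RF m (lcomm v0)) by (apply in_RF_lcomm; auto).
    rewrite (wcomm_ncl_wcomm i u (lcomm v0) [y]) by auto.
    set (u' := wconj u (winv (lcomm v0) ++ winv [y])).
    assert (Hg : in_RF m (winv (lcomm v0) ++ winv [y])) by auto with rf_words.
    assert (Hu' : in_ncl m i u') by (apply in_ncl_wconj; auto).
    assert (Hq' : in_gamma m a u') by (apply in_gamma_wconj; auto).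
    assert (Hi : i < m) by (destruct Hu; auto).
    apply in_gamma_app.
    + replace (a + (length v0 + 1)) with (S (a + length v0)) by lia. apply in_gamma_wcomm_l; auto.
    + apply in_gamma_winv. replace (a + (length v0 + 1)) with (S a + length v0) by lia.
      apply IH; auto. apply in_ncl_wcomm_l; auto. apply in_gamma_wcomm_l; auto.
Qed.

Definition lead_terms i n (L : list (bool * list letter)) :=
  Forall (fun p => length (snd p) = n /\ in_RF m (snd p) /\ exists b s', snd p = (i, b) :: s') L.

Definition lead_span i n w := exists L e,
  lead_terms i n L /\ in_ncl m i e /\ in_gamma m (S n) e /\ w =~ lcomm_prod L ++ e.

Global Instance lead_span_Proper i n : Proper (rf_eq m ==> iff) (lead_span i n).
Proof.
  intros a b H; unfold lead_span.
  split; intros [L [e [H1 [H2 [H3 E]]]]]; exists L, e; (split; [auto | split; [auto | split; [auto |]]]).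
  - rewrite <- H; auto.
  - rewrite H; auto.
Qed.

Lemma lead_terms_in_ncl i n L : i < m -> lead_terms i n L -> in_ncl m i (lcomm_prod L).
Proof.
  intros Hi H. induction H as [|[b s] L [H1 [H2 [b' [s' Hs]]]] _ IH]; [apply in_ncl_nil; auto|].
  change (lcomm_prod ((b, s) :: L)) with (winv_if b (lcomm s) ++ lcomm_prod L).
  apply in_ncl_app; auto. cbn [snd] in *. subst s.
  destruct b; unfold winv_if; [apply in_ncl_winv|]; apply (lcomm_in_ncl m _ (i, b')); auto; left; auto.
Qed.

Lemma lead_terms_in_gamma i n L : lead_terms i n L -> in_gamma m n (lcomm_prod L).
Proof.
  intro H. exists L. split; [|reflexivity].
  eapply Forall_impl; [|exact H]. simpl. intros p [H1 [H2 _]]; split; auto; lia.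
Qed.

Lemma lead_span_in_ncl i n w : i < m -> lead_span i n w -> in_ncl m i w.
Proof.
  intros Hi [L [e [HL [He [_ E]]]]]. rewrite E.
  apply in_ncl_app; auto. apply lead_terms_in_ncl with n; auto.
Qed.

Lemma lead_span_in_gamma i n w : lead_span i n w -> in_gamma m n w.
Proof.
  intros [L [e [HL [He [Hq E]]]]]. rewrite E.
  apply in_gamma_app; [apply lead_terms_in_gamma with i; auto|]. apply in_gamma_weaken with (S n); auto.
Qed.

Lemma lead_span_of_gamma i n e : i < m -> in_ncl m i e -> in_gamma m (S n) e -> lead_span i n e.
Proof. intros. exists [], e. split; [constructor|]. split; [auto | split; [auto | reflexivity]]. Qed.

Lemma lead_span_app i n a b : i < m -> lead_span i n a -> lead_span i n b -> lead_span i n (a ++ b).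
Proof.
  intros Hi [L1 [e1 [H1 [A1 [Q1 E1]]]]] [L2 [e2 [H2 [A2 [Q2 E2]]]]].
  exists (L1 ++ L2), (e1 ++ e2).
  split; [|split; [|split]]; [apply Forall_app; auto | apply in_ncl_app; auto | apply in_gamma_app; auto|].
  rewrite E1, E2, lcomm_prod_app.
  pose proof (lead_terms_in_ncl _ _ _ Hi H1). pose proof (lead_terms_in_ncl _ _ _ Hi H2).
  set (q1 := lcomm_prod L1) in *. set (q2 := lcomm_prod L2) in *.
  ncl_group i [q1; e1; q2; e2].
Qed.

Lemma lead_span_winv i n a : i < m -> lead_span i n a -> lead_span i n (winv a).
Proof.
  intros Hi [L [e [H1 [A1 [Q1 E1]]]]].
  exists (rev (map (fun p => (negb (fst p), snd p)) L)), (winv e). split; [|split; [|split]].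
  - apply Forall_rev, Forall_map. eapply Forall_impl; [|exact H1]. simpl; auto.
  - apply in_ncl_winv; auto.
  - apply in_gamma_winv; auto.
  - rewrite E1, <- lcomm_prod_winv. pose proof (lead_terms_in_ncl _ _ _ Hi H1).
    set (q := lcomm_prod L) in *. ncl_group i [q; e].
Qed.

Lemma lead_span_letter i b : i < m -> lead_span i 1 [(i, b)].
Proof.
  intro Hi. exists [(false, [(i, b)])], []. split; [|split; [|split]].
  - repeat constructor; auto. exists b, []; auto.
  - apply in_ncl_nil; auto.
  - apply in_gamma_nil.
  - unfold lcomm_prod; simpl. reflexivity.
Qed.

Lemma lead_terms_wcomm_letter i n L y : i < m -> fst y < m -> lead_terms i n L ->
  wcomm (lcomm_prod L) [y] =~ lcomm_prod (map (fun p => (fst p, snd p ++ [y])) L).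
Proof.
  intros Hi Hy H1.
  induction H1 as [|[b s] L [L1 [L2 [b' [s' Hs]]]] HL IH]; simpl in *.
  - unfold lcomm_prod; simpl. free_group.
  - assert (Ht : in_ncl m i (lcomm s)) by (subst; apply (lcomm_in_ncl m _ (i, b')); auto; left; auto).
    assert (HQ : in_ncl m i (lcomm_prod L)) by (apply lead_terms_in_ncl with n; auto).
    change (lcomm_prod ((b, s) :: L)) with (winv_if b (lcomm s) ++ lcomm_prod L).
    set (q := lcomm_prod L) in *. set (t := lcomm s) in *.
    assert (E : wcomm (winv_if b t ++ q) [y] =~ winv_if b (wcomm t [y]) ++ wcomm q [y])
      by (destruct b; unfold winv_if; ncl_group i [t; q]).
    rewrite E, IH. simpl. unfold t. rewrite lcomm_snoc by (subst; congruence). reflexivity.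
Qed.

Lemma lead_span_wcomm_letter i n w y : i < m -> fst y < m ->
  lead_span i n w -> lead_span i (S n) (wcomm w [y]).
Proof.
  intros Hi Hy [L [e [H1 [A1 [Q1 E1]]]]].
  exists (map (fun p => (fst p, snd p ++ [y])) L), (wcomm e [y]). split; [|split; [|split]].
  - apply Forall_map. eapply Forall_impl; [|exact H1]. simpl. intros [b s] [L1 [L2 [b' [s' Hs]]]]; simpl in *.
    repeat split.
    + rewrite length_app; simpl; unfold letter in *; lia.
    + apply in_RF_app; auto with rf_words.
    + exists b', (s' ++ [y]). rewrite Hs; reflexivity.
  - apply in_ncl_wcomm_l; auto with rf_words.
  - apply in_gamma_wcomm_l; auto with rf_words.
  - rewrite E1, <- (lead_terms_wcomm_letter i n) by auto.
    pose proof (lead_terms_in_ncl _ _ _ Hi H1). set (q := lcomm_prod L) in *.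
    ncl_group i [q; e].
Qed.

Lemma lead_span_wcomm_lcomm i v : i < m -> v <> [] -> in_RF m v ->
  forall n w, lead_span i n w -> lead_span i (n + length v) (wcomm w (lcomm v)).
Proof.
  intro Hi.
  induction v as [|y v0 IH] using rev_ind; [congruence|]. intros _ Hv n w Hw.
  apply Forall_app in Hv as [Hv0 Hy]. inversion Hy as [|? ? Hy1 _]; subst.
  destruct v0 as [|z v0'].
  - simpl. replace (n + 1) with (S n) by lia. apply lead_span_wcomm_letter; auto.
  - set (v0 := z :: v0') in *. assert (Hne : v0 <> []) by (unfold v0; congruence).
    rewrite lcomm_snoc, length_app by auto. change (length [y]) with 1.
    assert (HV : in_RF m (lcomm v0)) by (apply in_RF_lcomm; auto).
    assert (HY : in_RF m [y]) by auto with rf_words.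
    pose proof (lead_span_in_ncl i n w Hi Hw) as HwA.
    pose proof (lead_span_in_gamma i n w Hw) as HwQ.
    rewrite (wcomm_ncl_wcomm_split i w (lcomm v0) [y]) by auto.
    set (d := wcomm w (winv (lcomm v0) ++ winv [y])).
    assert (Hg : in_RF m (winv (lcomm v0) ++ winv [y])) by auto with rf_words.
    assert (HdA : in_ncl m i d) by (apply in_ncl_wcomm_l; auto).
    assert (HdQ : in_gamma m (S n) d) by (apply in_gamma_wcomm_l; auto).
    replace (n + (length v0 + 1)) with (S (n + length v0)) by lia.
    apply lead_span_app; [auto | | apply lead_span_app; [auto | | apply lead_span_app; [auto | |]]].
    + apply lead_span_wcomm_letter; auto.
    + apply lead_span_of_gamma; auto.
      * apply in_ncl_wcomm_l; [apply in_ncl_wcomm_l |]; auto.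
      * apply in_gamma_wcomm_l; auto. replace (S (n + length v0)) with (S n + length v0) by lia.
        apply in_gamma_wcomm_lcomm with i; auto.
    + apply lead_span_winv; auto. replace (S (n + length v0)) with (S n + length v0) by lia.
      apply IH; auto. apply lead_span_wcomm_letter; auto.
    + apply lead_span_of_gamma; auto.
      * apply in_ncl_winv. apply in_ncl_wcomm_l; [apply in_ncl_wcomm_l |]; auto.
      * apply in_gamma_winv. replace (S (S (n + length v0))) with (S (S n) + length v0) by lia.
        apply in_gamma_wcomm_lcomm with i; auto. apply in_ncl_wcomm_l; auto. apply in_gamma_wcomm_l; auto.
Qed.

End LeadingGenerator.

Definition dcomm i j c := wcomm (wcomm c (gen i)) (gen j).

Record dfactor := DFactor { df_inv : bool; df_i : nat; df_j : nat; df_arg : word }.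

Definition dfactor_eval (k : dfactor) := winv_if (df_inv k) (dcomm (df_i k) (df_j k) (df_arg k)).
Definition dfactors_eval (K : list dfactor) := flat_map dfactor_eval K.
Definition dfactor_inv (k : dfactor) := DFactor (negb (df_inv k)) (df_i k) (df_j k) (df_arg k).

Lemma dfactors_eval_app K1 K2 : dfactors_eval (K1 ++ K2) = dfactors_eval K1 ++ dfactors_eval K2.
Proof. apply flat_map_app. Qed.

Section DoubleCommutators.
Variable m : nat.
Infix "=~" := (rf_eq m) (at level 70).

Definition dfactors_ok r (K : list dfactor) := Forall (fun k =>
  df_i k < m - 1 /\ df_j k < m - 1 /\ in_RF m (df_arg k) /\ in_gamma m (r - 2) (df_arg k)) K.

Definition dcomm_span r w := exists K e,
  dfactors_ok r K /\ in_gamma m (S r) e /\ w =~ dfactors_eval K ++ e.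

Lemma in_RF_dcomm i j c : i < m -> j < m -> in_RF m c -> in_RF m (dcomm i j c).
Proof. intros; unfold dcomm; auto with rf_words. Qed.

Lemma in_gamma_dcomm r i j c : 2 <= r -> i < m -> j < m -> in_RF m c -> in_gamma m (r - 2) c ->
  in_gamma m r (dcomm i j c).
Proof.
  intros. unfold dcomm. replace r with (S (S (r - 2))) by lia.
  apply in_gamma_wcomm_l; auto with rf_words. apply in_gamma_wcomm_l; auto with rf_words.
Qed.

Lemma in_RF_dfactors r K : dfactors_ok r K -> in_RF m (dfactors_eval K).
Proof.
  induction 1 as [|k K [H1 [H2 [H3 _]]] _ IH]; simpl; [apply in_RF_nil|].
  apply in_RF_app; auto. apply in_RF_winv_if, in_RF_dcomm; auto; lia.
Qed.

Global Instance dcomm_span_Proper r : Proper (rf_eq m ==> iff) (dcomm_span r).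
Proof.
  intros a b H; unfold dcomm_span.
  split; intros [K [e [H1 [H2 E]]]]; exists K, e; (split; [auto | split; [auto |]]).
  - rewrite <- H; auto.
  - rewrite H; auto.
Qed.

Lemma dcomm_span_of_gamma r e : in_gamma m (S r) e -> dcomm_span r e.
Proof. intro. exists [], e. split; [constructor | split; [auto | reflexivity]]. Qed.

Lemma dcomm_span_app r a b : dcomm_span r a -> dcomm_span r b -> dcomm_span r (a ++ b).
Proof.
  intros [K1 [e1 [H1 [Q1 E1]]]] [K2 [e2 [H2 [Q2 E2]]]].
  exists (K1 ++ K2), (wconj e1 (dfactors_eval K2) ++ e2). split; [apply Forall_app; auto | split].
  - apply in_gamma_app; auto. apply in_gamma_wconj; auto. eapply in_RF_dfactors; eauto.
  - rewrite E1, E2, dfactors_eval_app. free_group.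
Qed.

Lemma dfactors_eval_winv K : winv (dfactors_eval K) =~ dfactors_eval (rev (map dfactor_inv K)).
Proof.
  induction K as [|k K IH]; [reflexivity|]. simpl.
  rewrite winv_app, IH, dfactors_eval_app. simpl. rewrite app_nil_r. apply app_rf_Proper; [reflexivity|].
  unfold dfactor_eval, dfactor_inv; simpl. destruct (df_inv k); simpl; rewrite ?winv_involutive; reflexivity.
Qed.

Lemma dfactors_ok_winv r K : dfactors_ok r K -> dfactors_ok r (rev (map dfactor_inv K)).
Proof. intro H. apply Forall_rev, Forall_map. eapply Forall_impl; [|exact H]. simpl; auto. Qed.

Lemma dcomm_span_winv r a : dcomm_span r a -> dcomm_span r (winv a).
Proof.
  intros [K [e [H1 [Q1 E1]]]].
  exists (rev (map dfactor_inv K)), (wconj (winv e) (winv (dfactors_eval K))). split; [|split].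
  - apply dfactors_ok_winv; auto.
  - apply in_gamma_wconj; [apply in_gamma_winv; auto | apply in_RF_winv; eapply in_RF_dfactors; eauto].
  - rewrite E1, <- dfactors_eval_winv. free_group.
Qed.

Lemma dcomm_span_dcomm r b i j c : i < m - 1 -> j < m - 1 -> in_RF m c -> in_gamma m (r - 2) c ->
  dcomm_span r (winv_if b (dcomm i j c)).
Proof.
  intros. exists [DFactor b i j c], []. split; [repeat constructor; auto | split; [apply in_gamma_nil |]].
  unfold dfactors_eval, dfactor_eval; simpl. rewrite !app_nil_r. reflexivity.
Qed.

Lemma dcomm_span_wconj r X g : in_gamma m r X -> in_RF m g -> dcomm_span r X -> dcomm_span r (wconj X g).
Proof.
  intros HX Hg HS. assert (E : wconj X g =~ X ++ wcomm X g) by free_group.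
  rewrite E. apply dcomm_span_app; auto. apply dcomm_span_of_gamma, in_gamma_wcomm_l; auto.
Qed.

Lemma dcomm_span_dcomm_letters r c i e1 j e2 : 3 <= r -> in_RF m c -> in_gamma m (r - 2) c ->
  i < m - 1 -> j < m - 1 -> dcomm_span r (wcomm (wcomm c [(i, e1)]) [(j, e2)]).
Proof.
  intros Hr Hc Qc Hi Hj.
  assert (Hgi : in_RF m (gen i)) by auto with rf_words.
  assert (Hgj : in_RF m (gen j)) by auto with rf_words.
  assert (Ai : in_ncl m i (gen i)) by auto with rf_words.
  assert (Pq : in_gamma m r (dcomm i j c)) by (apply in_gamma_dcomm; auto; lia).
  assert (Span : forall b, dcomm_span r (winv_if b (dcomm i j c))) by (intro; apply dcomm_span_dcomm; auto).
  destruct e1, e2; change [(i, true)] with (winv (gen i)); change [(j, true)] with (winv (gen j));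
    change [(i, false)] with (gen i); change [(j, false)] with (gen j).
  - assert (E : wcomm (wcomm c (winv (gen i))) (winv (gen j)) =~ wconj (dcomm i j c) (winv (gen j)))
      by (unfold dcomm; ncl_group i [gen i]).
    rewrite E. apply dcomm_span_wconj; auto using in_RF_winv. apply (Span false).
  - assert (E : wcomm (wcomm c (winv (gen i))) (gen j) =~ winv (dcomm i j c))
      by (unfold dcomm; ncl_group i [gen i]).
    rewrite E. apply (Span true).
  - assert (E : wcomm (wcomm c (gen i)) (winv (gen j)) =~ wconj (winv (dcomm i j c)) (winv (gen j)))
      by (unfold dcomm; free_group).
    rewrite E. apply dcomm_span_wconj; auto using in_RF_winv, in_gamma_winv. apply (Span true).
  - apply (Span false).
Qed.

End DoubleCommutators.

Lemma split_last2 (s : list letter) : 3 <= length s -> exists s0 y1 y2, s = s0 ++ [y1; y2] /\ s0 <> [].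
Proof.
  intro H. destruct (rev s) as [|y2 [|y1 t]] eqn:E;
    apply (f_equal (@length _)) in E as El; rewrite length_rev in El; simpl in El; try lia.
  exists (rev t), y1, y2. split.
  - rewrite <- (rev_involutive s), E. simpl. rewrite <- app_assoc. reflexivity.
  - intro Ht. destruct t; simpl in *; [lia | destruct (rev t); discriminate].
Qed.

Section WeightReduction.
Variable m : nat.
Infix "=~" := (rf_eq m) (at level 70).

Lemma dcomm_span_lcomm_last2 r s0 y1 y2 : 3 <= r -> s0 <> [] -> length s0 = r - 2 ->
  in_RF m s0 -> fst y1 < m - 1 -> fst y2 < m - 1 -> dcomm_span m r (lcomm (s0 ++ [y1; y2])).
Proof.
  intros Hr Hne Hl Hs Hi Hj. rewrite lcomm_app by auto. destruct y1 as [i e1], y2 as [j e2].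
  apply dcomm_span_dcomm_letters; auto; [apply in_RF_lcomm | apply in_gamma_lcomm]; auto; lia.
Qed.

(* If [x_(m-1)] recurs among the last two letters the commutator is trivial. *)
Lemma dcomm_span_lcomm_lead r b s : 3 <= r -> length ((m - 1, b) :: s) = r -> in_RF m ((m - 1, b) :: s) ->
  dcomm_span m r (lcomm ((m - 1, b) :: s)).
Proof.
  intros Hr Hl Hs. assert (Hr' : 3 <= length ((m - 1, b) :: s)) by lia.
  destruct (split_last2 _ Hr') as [[|h s0] [y1 [y2 [E Hne]]]]; [congruence|].
  simpl in E. injection E as <- ->. rewrite app_comm_cons in *.
  apply Forall_app in Hs as Hs'. destruct Hs' as [Hs0 Hy].
  apply Forall_cons_iff in Hy as [Hy1 Hy]. apply Forall_cons_iff in Hy as [Hy2 _].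
  rewrite length_app in Hl; simpl in Hl.
  destruct (Nat.eq_dec (fst y1) (m - 1)) as [E1 | E1]; [|destruct (Nat.eq_dec (fst y2) (m - 1)) as [E2 | E2]].
  - rewrite (lcomm_repeat_trivial m [] (m - 1, b) s0 y1 [y2]); auto. apply dcomm_span_of_gamma, in_gamma_nil.
  - assert (Z : lcomm ([] ++ (m - 1, b) :: (s0 ++ [y1]) ++ [y2]) =~ []).
    { apply lcomm_repeat_trivial; auto. simpl. rewrite <- app_assoc. exact Hs. }
    rewrite <- app_assoc in Z. apply (dcomm_span_Proper m r _ _ Z), dcomm_span_of_gamma, in_gamma_nil.
  - assert (Hm : m - 1 < m) by (inversion Hs0; auto).
    apply dcomm_span_lcomm_last2; auto; simpl; unfold letter in *; lia.
Qed.

Lemma dcomm_span_of_lead_span r w : 3 <= r -> lead_span m (m - 1) r w -> dcomm_span m r w.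
Proof.
  intros Hr [L [e [HL [_ [He E]]]]]. rewrite E. apply dcomm_span_app; [|apply dcomm_span_of_gamma; auto].
  clear E. induction HL as [|[b s] L [H1 [H2 [b' [s' Hs]]]] _ IH].
  - apply dcomm_span_of_gamma, in_gamma_nil.
  - change (lcomm_prod ((b, s) :: L)) with (winv_if b (lcomm s) ++ lcomm_prod L).
    apply dcomm_span_app; auto. cbn [snd] in *. subst s.
    destruct b; unfold winv_if; [apply dcomm_span_winv|]; apply dcomm_span_lcomm_lead; auto.
Qed.

Lemma lead_span_letter_wcomm_lcomm y v : fst y < m -> v <> [] -> in_RF m v ->
  lead_span m (fst y) (S (length v)) (wcomm [y] (lcomm v)).
Proof.
  intros Hy Hne Hv. destruct y as [i b].
  apply (lead_span_wcomm_lcomm m i v Hy Hne Hv 1), lead_span_letter; auto.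
Qed.

(* Modulo weight [r + 1], a commutator ending in [x_(m-1)] is rewritten as one starting with [x_(m-1)]. *)
Lemma dcomm_span_lcomm r s : 3 <= r -> length s = r -> in_RF m s -> dcomm_span m r (lcomm s).
Proof.
  intros Hr Hl Hs.
  destruct (split_last2 s) as [s0 [y1 [y2 [-> Hne]]]]; [lia |].
  apply Forall_app in Hs as [Hs0 Hy].
  apply Forall_cons_iff in Hy as [Hy1 Hy]. apply Forall_cons_iff in Hy as [Hy2 _].
  rewrite length_app in Hl. simpl in Hl.
  assert (Hne1 : s0 ++ [y1] <> []) by (destruct s0; discriminate).
  destruct (Nat.eq_dec (fst y2) (m - 1)) as [E2 | E2]; [|destruct (Nat.eq_dec (fst y1) (m - 1)) as [E1 | E1]].
  - replace (s0 ++ [y1; y2]) with ((s0 ++ [y1]) ++ [y2]) by (rewrite <- app_assoc; reflexivity).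
    rewrite lcomm_snoc, wcomm_swap by auto.
    apply dcomm_span_of_lead_span; auto. apply lead_span_winv; [lia|].
    rewrite <- E2. replace r with (S (length (s0 ++ [y1]))) by (rewrite length_app; simpl; lia).
    apply lead_span_letter_wcomm_lcomm; auto with rf_words.
  - rewrite lcomm_app by auto. unfold fold_left, lcomm_step. rewrite (wcomm_swap (lcomm s0)).
    apply dcomm_span_of_lead_span; auto. rewrite <- E1. replace r with (S (S (length s0))) by lia.
    apply lead_span_wcomm_letter; auto. apply lead_span_winv; auto.
    apply lead_span_letter_wcomm_lcomm; auto.
  - apply dcomm_span_lcomm_last2; auto; lia.
Qed.

End WeightReduction.

Definition index_pairs (M : nat) := flat_map (fun i => map (fun j => (i, j)) (seq 0 M)) (seq 0 M).

Definition update2 {A} (w : nat -> nat -> A) i j (v : A) :=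
  fun i' j' => if (i' =? i) && (j' =? j) then v else w i' j'.

Lemma flat_map_update_split {K} (eqd : forall x y : K, {x = y} + {x <> y}) (L : list K) (x : K)
  (F G : K -> word) : NoDup L -> In x L -> (forall y, y <> x -> F y = G y) ->
  exists A B, flat_map F L = A ++ F x ++ B /\ flat_map G L = A ++ G x ++ B.
Proof.
  intros ND Hin H. apply in_split in Hin as [L1 [L2 ->]].
  apply NoDup_remove_2 in ND. rewrite in_app_iff in ND.
  assert (E : forall L0, ~ In x L0 -> flat_map F L0 = flat_map G L0).
  { induction L0 as [|y L0 IH]; simpl; auto. intro Hn. rewrite H, IH; auto. }
  exists (flat_map F L1), (flat_map F L2). rewrite !flat_map_app. simpl. split; [reflexivity|].
  rewrite (E L1), (E L2); auto.
Qed.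

Lemma NoDup_pairs (l1 : list nat) (g : nat -> list nat) : NoDup l1 -> (forall i, NoDup (g i)) ->
  NoDup (flat_map (fun i => map (fun j => (i, j)) (g i)) l1).
Proof.
  intros H1 H2. induction H1 as [|i l1 Hi H1 IH]; simpl; [constructor|].
  apply NoDup_app; auto.
  - apply NoDup_map_NoDup_ForallPairs; auto. intros a b _ _ E; injection E; auto.
  - intros [a b] Ha Hb. apply in_map_iff in Ha as [j [E _]]. injection E as -> ->.
    apply in_flat_map in Hb as [i' [Hi' Hb]]. apply in_map_iff in Hb as [j' [E _]]. injection E as -> ->. auto.
Qed.

Lemma In_pairs (l1 : list nat) (g : nat -> list nat) i j :
  In (i, j) (flat_map (fun i => map (fun j => (i, j)) (g i)) l1) <-> In i l1 /\ In j (g i).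
Proof.
  rewrite in_flat_map. split.
  - intros [i' [Hi H]]. apply in_map_iff in H as [j' [E Hj]]. injection E as -> ->. auto.
  - intros [Hi Hj]. exists i. split; auto. apply in_map_iff. exists j; auto.
Qed.

Lemma update2_split {A} (w : nat -> nat -> A) (F : nat -> nat -> A -> word) l i j v :
  NoDup l -> In (i, j) l ->
  exists B C, flat_map (fun p => F (fst p) (snd p) (w (fst p) (snd p))) l = B ++ F i j (w i j) ++ C /\
    flat_map (fun p => F (fst p) (snd p) (update2 w i j v (fst p) (snd p))) l = B ++ F i j v ++ C.
Proof.
  intros ND Hin.
  assert (pair_eq_dec : forall x y : nat * nat, {x = y} + {x <> y})
    by (decide equality; apply Nat.eq_dec).
  destruct (flat_map_update_split pair_eq_dec l (i, j)
              (fun p => F (fst p) (snd p) (w (fst p) (snd p)))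
              (fun p => F (fst p) (snd p) (update2 w i j v (fst p) (snd p))) ND Hin) as [B [C [E1 E2]]].
  - intros [i' j'] Hne. simpl. unfold update2.
    destruct (i' =? i) eqn:Ei, (j' =? j) eqn:Ej; simpl; auto.
    apply Nat.eqb_eq in Ei, Ej; subst; congruence.
  - exists B, C. rewrite E1, E2. simpl. unfold update2. rewrite !Nat.eqb_refl. auto.
Qed.

Lemma in_RF_app_inv m a b : in_RF m (a ++ b) -> in_RF m a /\ in_RF m b.
Proof. apply Forall_app. Qed.

Section AbsorbGamma3.
Variable m : nat.
Infix "=~" := (rf_eq m) (at level 70).

Definition dcomm_prod (w : nat -> nat -> word) :=
  flat_map (fun p => dcomm (fst p) (snd p) (w (fst p) (snd p))) (index_pairs (m - 1)).

Definition args_in_RF (w : nat -> nat -> word) := forall i j, in_RF m (w i j).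

Lemma args_in_RF_update2 w i j v : args_in_RF w -> in_RF m v -> args_in_RF (update2 w i j v).
Proof. intros H Hv i' j'. unfold update2. destruct (_ && _); auto. Qed.

Lemma in_RF_dcomm_prod w : args_in_RF w -> in_RF m (dcomm_prod w).
Proof.
  intro H. unfold dcomm_prod. apply Forall_flat_map, Forall_forall. intros [i j] Hp.
  apply In_pairs in Hp as [Hi Hj]. apply in_seq in Hi, Hj. apply in_RF_dcomm; simpl; auto; lia.
Qed.

Lemma dcomm_prod_split w i j v : args_in_RF w -> i < m - 1 -> j < m - 1 -> exists A B, in_RF m B /\
  dcomm_prod w = A ++ dcomm i j (w i j) ++ B /\ dcomm_prod (update2 w i j v) = A ++ dcomm i j v ++ B.
Proof.
  intros Hw Hi Hj.
  assert (Hp : In (i, j) (index_pairs (m - 1))) by (apply In_pairs; split; apply in_seq; lia).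
  destruct (update2_split w dcomm _ i j v (NoDup_pairs _ _ (seq_NoDup _ _) (fun _ => seq_NoDup _ _)) Hp)
    as [A [B [E1 E2]]].
  exists A, B. split; [|split; auto].
  pose proof (in_RF_dcomm_prod w Hw) as H. unfold dcomm_prod, index_pairs in H. rewrite E1 in H.
  apply in_RF_app_inv in H as [_ H]. apply in_RF_app_inv in H as [_ H]. exact H.
Qed.

(* Modulo weight [r + 1], [c |-> dcomm i j c] is a homomorphism on [in_gamma m (r - 2)]. *)
Lemma dcomm_app i j c o : i < m -> j < m -> in_RF m c -> in_RF m o ->
  dcomm i j o ++ dcomm i j c =~ dcomm i j (c ++ o) ++ winv (wcomm (wcomm (wcomm c (gen i)) o) (gen j)).
Proof.
  intros Hi Hj Hc Ho. assert (Ai : in_ncl m i (gen i)) by auto with rf_words.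
  unfold dcomm. ncl_group i [gen i].
Qed.

Lemma dcomm_winv i j c : i < m -> j < m -> in_RF m c ->
  winv (dcomm i j c) =~ dcomm i j (winv c) ++ winv (wcomm (wcomm (winv (wcomm c (gen i))) (winv c)) (gen j)).
Proof.
  intros Hi Hj Hc. assert (Ai : in_ncl m i (gen i)) by auto with rf_words.
  unfold dcomm. ncl_group i [gen i].
Qed.

Lemma dcomm_prod_absorb_dcomm r w i j c : 3 <= r -> args_in_RF w -> i < m - 1 -> j < m - 1 ->
  in_RF m c -> in_gamma m (r - 2) c ->
  exists w' e, args_in_RF w' /\ in_gamma m (S r) e /\ dcomm_prod w ++ dcomm i j c =~ dcomm_prod w' ++ e.
Proof.
  intros Hr Hw Hi Hj Hc Qc.
  destruct (dcomm_prod_split w i j (c ++ w i j) Hw Hi Hj) as [A [B [HB [E1 E2]]]].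
  set (Er := wcomm (wcomm (wcomm c (gen i)) (w i j)) (gen j)).
  assert (QE : in_gamma m (S r) Er).
  { unfold Er. replace (S r) with (S (S (S (r - 2)))) by lia.
    repeat apply in_gamma_wcomm_l; auto with rf_words. }
  assert (Qp : in_gamma m r (dcomm i j c)) by (apply in_gamma_dcomm; auto; lia).
  exists (update2 w i j (c ++ w i j)), (wconj (winv Er) B ++ wcomm B (dcomm i j c)). split; [|split].
  - apply args_in_RF_update2; auto with rf_words.
  - apply in_gamma_app; [apply in_gamma_wconj; auto using in_gamma_winv | apply in_gamma_wcomm_r; auto].
  - rewrite E1, E2.
    transitivity (A ++ (dcomm i j (w i j) ++ dcomm i j c) ++ B ++ wcomm B (dcomm i j c)); [free_group|].
    rewrite dcomm_app by (auto; lia). unfold Er. free_group.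
Qed.

Lemma dcomm_prod_absorb_dfactor r w k : 3 <= r -> args_in_RF w -> dfactors_ok m r [k] ->
  exists w' e, args_in_RF w' /\ in_gamma m (S r) e /\ dcomm_prod w ++ dfactor_eval k =~ dcomm_prod w' ++ e.
Proof.
  intros Hr Hw HK. inversion HK as [|? ? [Hi [Hj [Hc Qc]]] _]; subst.
  destruct k as [[|] i j c]; simpl in *; unfold dfactor_eval; simpl; [|apply dcomm_prod_absorb_dcomm; auto].
  set (F := winv (wcomm (wcomm (winv (wcomm c (gen i))) (winv c)) (gen j))).
  assert (QF : in_gamma m (S r) F).
  { unfold F. apply in_gamma_winv. replace (S r) with (S (S (S (r - 2)))) by lia.
    apply in_gamma_wcomm_l; auto with rf_words. apply in_gamma_wcomm_l; auto with rf_words.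
    apply in_gamma_winv, in_gamma_wcomm_l; auto with rf_words. }
  destruct (dcomm_prod_absorb_dcomm r w i j (winv c) Hr Hw Hi Hj (in_RF_winv _ _ Hc)
              (in_gamma_winv _ _ _ Qc))
    as [w' [e [Hw' [Qe E]]]].
  exists w', (e ++ F). split; [auto | split; [apply in_gamma_app; auto |]].
  unfold winv_if. rewrite (dcomm_winv i j c) by (auto; lia). fold F. rewrite app_assoc, E. free_group.
Qed.

Lemma dcomm_prod_absorb_dfactors r K : 3 <= r -> dfactors_ok m r K -> forall w, args_in_RF w ->
  exists w' e, args_in_RF w' /\ in_gamma m (S r) e /\ dcomm_prod w ++ dfactors_eval K =~ dcomm_prod w' ++ e.
Proof.
  intros Hr HK. induction HK as [|k K Hk HK IH]; intros w Hw.
  - exists w, []. split; [auto | split; [apply in_gamma_nil | simpl; reflexivity]].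
  - destruct (dcomm_prod_absorb_dfactor r w k Hr Hw (Forall_cons _ Hk (Forall_nil _)))
      as [w1 [e1 [Hw1 [Q1 E1]]]].
    destruct (IH w1 Hw1) as [w2 [e2 [Hw2 [Q2 E2]]]].
    exists w2, (e2 ++ wconj e1 (dfactors_eval K)). split; [auto | split].
    + apply in_gamma_app; auto. apply in_gamma_wconj; auto. eapply in_RF_dfactors; eauto.
    + change (dfactors_eval (k :: K)) with (dfactor_eval k ++ dfactors_eval K).
      rewrite app_assoc, E1.
      transitivity ((dcomm_prod w1 ++ dfactors_eval K) ++ wconj e1 (dfactors_eval K)); [free_group|].
      rewrite E2. free_group.
Qed.

Definition dcomm_prod_absorbs r := forall w q, args_in_RF w -> in_gamma m r q ->
  exists w', args_in_RF w' /\ dcomm_prod w ++ q =~ dcomm_prod w'.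

Lemma dcomm_prod_absorbs_span r : 3 <= r -> dcomm_prod_absorbs (S r) ->
  forall w x, args_in_RF w -> dcomm_span m r x ->
  exists w', args_in_RF w' /\ dcomm_prod w ++ x =~ dcomm_prod w'.
Proof.
  intros Hr Habs w x Hw [K [e [HK [Qe Ee]]]].
  destruct (dcomm_prod_absorb_dfactors r K Hr HK w Hw) as [w1 [e1 [Hw1 [Q1 E1]]]].
  destruct (Habs w1 (e1 ++ e) Hw1 (in_gamma_app _ _ _ _ Q1 Qe)) as [w2 [Hw2 E2]].
  exists w2. split; auto. rewrite Ee, app_assoc, E1, <- app_assoc. exact E2.
Qed.

Lemma dcomm_prod_absorbs_step r : 3 <= r -> dcomm_prod_absorbs (S r) -> dcomm_prod_absorbs r.
Proof.
  intros Hr Habs w q Hw [L [HL E]].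
  enough (exists w', args_in_RF w' /\ dcomm_prod w ++ lcomm_prod L =~ dcomm_prod w') as [w' [Hw' E']]
    by (exists w'; split; auto; rewrite E; auto).
  clear q E. revert w Hw.
  induction HL as [|[b s] L [Hl Hs] HL IHL]; intros w Hw.
  - exists w. split; auto. simpl. rewrite app_nil_r. reflexivity.
  - change (lcomm_prod ((b, s) :: L)) with (winv_if b (lcomm s) ++ lcomm_prod L). simpl in Hl, Hs.
    assert (Hhead : exists w1, args_in_RF w1 /\ dcomm_prod w ++ winv_if b (lcomm s) =~ dcomm_prod w1).
    { apply (dcomm_prod_absorbs_span r); auto. destruct (Nat.eq_dec (length s) r) as [El | Nl].
      - destruct b; [apply dcomm_span_winv|]; apply dcomm_span_lcomm; auto.
      - apply dcomm_span_of_gamma, in_gamma_winv_if, in_gamma_lcomm; auto; lia. }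
    destruct Hhead as [w1 [Hw1 E1]]. destruct (IHL w1 Hw1) as [w2 [Hw2 E2]].
    exists w2. split; auto. rewrite app_assoc, E1. exact E2.
Qed.

Lemma dcomm_prod_absorbs_above_class r : m < r -> dcomm_prod_absorbs r.
Proof.
  intros Hr w q Hw Hq. exists w. split; auto.
  rewrite (in_gamma_nilpotent m q), app_nil_r; [reflexivity|]. apply in_gamma_weaken with r; auto.
Qed.

Lemma dcomm_prod_absorbs_from n : forall r, m < r + n -> 3 <= r -> dcomm_prod_absorbs r.
Proof.
  induction n as [|n IHn]; intros r Hrn Hr.
  - apply dcomm_prod_absorbs_above_class. lia.
  - apply dcomm_prod_absorbs_step; auto. apply IHn; lia.
Qed.

Lemma gamma3_dcomm_prod q : in_gamma m 3 q -> exists w, args_in_RF w /\ q =~ dcomm_prod w.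
Proof.
  intro Hq. set (w0 := fun _ _ : nat => @nil letter).
  assert (Hw0 : args_in_RF w0) by (intros i j; apply in_RF_nil).
  assert (P0 : dcomm_prod w0 =~ []).
  { unfold dcomm_prod. induction (index_pairs (m - 1)) as [|p l IH]; [reflexivity|].
    cbn [flat_map]. rewrite IH, app_nil_r. unfold dcomm, w0. free_group. }
  destruct (dcomm_prod_absorbs_from m 3 ltac:(lia) ltac:(lia) w0 q Hw0 Hq) as [w [Hw E]].
  exists w. split; auto. rewrite <- E, P0. reflexivity.
Qed.

End AbsorbGamma3.

Definition ordered_pairs (m : nat) := flat_map (fun i => map (fun j => (i, j)) (seq i (m - i))) (seq 0 m).

Definition update1 {A} (w : nat -> A) k (v : A) := fun k' => if k' =? k then v else w k'.

Definition basic_comm i j := wcomm (gen j) (gen i).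

Lemma flat_map_pairs {A} (F : nat * nat -> list A) (g : nat -> list nat) l :
  flat_map F (flat_map (fun i => map (fun j => (i, j)) (g i)) l) =
  flat_map (fun i => flat_map (fun j => F (i, j)) (g i)) l.
Proof.
  induction l as [|i l IH]; simpl; auto. rewrite flat_map_app, IH. f_equal.
  induction (g i) as [|j t IH2]; simpl; auto. rewrite IH2. reflexivity.
Qed.

Lemma wrep_app_comm k w : wrep k w ++ w = w ++ wrep k w.
Proof. induction k; simpl; [rewrite app_nil_r; reflexivity|]. rewrite <- app_assoc, IHk. reflexivity. Qed.

Lemma wpow_opp w n : wpow w (- n) = wpow (winv w) n.
Proof. destruct n; simpl; rewrite ?winv_involutive; reflexivity. Qed.

Section Collection.
Variable m : nat.
Infix "=~" := (rf_eq m) (at level 70).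

Lemma wpow_succ_r w n : wpow w n ++ w =~ wpow w (n + 1).
Proof.
  destruct n as [|p|p].
  - simpl. rewrite app_nil_r. reflexivity.
  - replace (Z.pos p + 1)%Z with (Z.pos (Pos.succ p)) by lia.
    change (wrep (Pos.to_nat p) w ++ w =~ wrep (Pos.to_nat (Pos.succ p)) w).
    rewrite Pos2Nat.inj_succ. simpl. rewrite wrep_app_comm. reflexivity.
  - destruct (Pos.succ_pred_or p) as [-> | E].
    + replace (Z.neg 1 + 1)%Z with 0%Z by lia. simpl. rewrite app_nil_r. apply app_winv_l.
    + set (q := Pos.pred p) in *. rewrite <- E.
      replace (Z.neg (Pos.succ q) + 1)%Z with (Z.neg q) by lia.
      change (wrep (Pos.to_nat (Pos.succ q)) (winv w) ++ w =~ wrep (Pos.to_nat q) (winv w)).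
      rewrite Pos2Nat.inj_succ. simpl. rewrite <- wrep_app_comm, <- app_assoc, app_winv_l, app_nil_r.
      reflexivity.
Qed.

Lemma wpow_pred_r w n : wpow w n ++ winv w =~ wpow w (n - 1).
Proof.
  replace n with (- (- n))%Z at 1 by lia. rewrite wpow_opp, wpow_succ_r.
  replace (- n + 1)%Z with (- (n - 1))%Z by lia. rewrite wpow_opp, winv_involutive. reflexivity.
Qed.

Lemma in_gamma_wpow r w n : in_gamma m r w -> in_gamma m r (wpow w n).
Proof.
  intro H. assert (Hrep : forall k v, in_gamma m r v -> in_gamma m r (wrep k v))
    by (induction k; simpl; intros; [apply in_gamma_nil | apply in_gamma_app; auto]).
  destruct n; simpl; [apply in_gamma_nil | apply Hrep; auto | apply Hrep, in_gamma_winv; auto].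
Qed.

Definition gen_powers (a : nat -> Z) := flat_map (fun i => wpow (gen i) (a i)) (seq 0 m).

Definition basic_comms (b : nat -> nat -> Z) :=
  flat_map (fun p => wpow (basic_comm (fst p) (snd p)) (b (fst p) (snd p))) (ordered_pairs m).

Lemma in_gamma_basic_comm i j : i < m -> j < m -> in_gamma m 2 (basic_comm i j).
Proof.
  intros. apply (in_gamma_lcomm m 2 [(j, false); (i, false)]); [simpl; lia | repeat constructor; auto].
Qed.

Lemma in_gamma_letters_wcomm z y : fst z < m -> fst y < m -> in_gamma m 2 (wcomm [z] [y]).
Proof. intros. apply (in_gamma_lcomm m 2 [z; y]); [simpl; lia | repeat constructor; auto]. Qed.

Lemma ordered_pairs_bound p : In p (ordered_pairs m) -> fst p < m /\ snd p < m.
Proof. destruct p. intros [Hi Hj]%In_pairs. apply in_seq in Hi, Hj. simpl; lia. Qed.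

Lemma in_gamma_basic_comms b : in_gamma m 2 (basic_comms b).
Proof.
  unfold basic_comms. pose proof ordered_pairs_bound as H.
  induction (ordered_pairs m) as [|p l IH]; [apply in_gamma_nil|]. cbn [flat_map].
  apply in_gamma_app; [|apply IH; intros; apply H; right; auto].
  apply in_gamma_wpow. destruct (H p (or_introl eq_refl)). apply in_gamma_basic_comm; auto.
Qed.

Lemma in_RF_basic_comms b : in_RF m (basic_comms b).
Proof.
  apply Forall_flat_map, Forall_forall. intros p Hp%ordered_pairs_bound.
  apply in_RF_wpow, in_RF_wcomm; apply in_RF_gen; tauto.
Qed.

Lemma in_RF_gen_powers a : in_RF m (gen_powers a).
Proof. apply Forall_flat_map, Forall_forall. intros i Hi%in_seq. apply in_RF_wpow, in_RF_gen. lia. Qed.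

Lemma in_RF_letter_wcomms B y : in_RF m B -> fst y < m -> in_RF m (flat_map (fun z => wcomm [z] [y]) B).
Proof.
  intros HB Hy. apply Forall_flat_map. eapply Forall_impl; [|exact HB].
  intros z Hz. apply in_RF_wcomm; auto with rf_words.
Qed.

Lemma in_gamma_letter_wcomms B y : in_RF m B -> fst y < m ->
  in_gamma m 2 (flat_map (fun z => wcomm [z] [y]) B).
Proof.
  intros HB Hy. induction HB as [|z L Hz _ IH]; cbn [flat_map]; [apply in_gamma_nil|].
  apply in_gamma_app; auto. apply in_gamma_letters_wcomm; auto.
Qed.

Lemma move_letter_left L y : in_RF m L -> fst y < m ->
  exists q, in_gamma m 3 q /\ L ++ [y] =~ [y] ++ L ++ flat_map (fun z => wcomm [z] [y]) L ++ q.
Proof.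
  intros HL Hy. induction L as [|z L IH].
  - exists []. split; [apply in_gamma_nil | simpl; reflexivity].
  - inversion HL as [|? ? Hz HL']; subst. destruct (IH HL') as [q [Hq E]].
    set (D := flat_map (fun z => wcomm [z] [y]) L).
    exists (wconj (wcomm (wcomm [z] [y]) L) D ++ q). split.
    + apply in_gamma_app; auto. apply in_gamma_wconj; [|apply in_RF_letter_wcomms; auto].
      apply in_gamma_wcomm_l; auto. apply in_gamma_letters_wcomm; auto.
    + change ((z :: L) ++ [y]) with ([z] ++ (L ++ [y])). rewrite E.
      change (flat_map (fun z0 => wcomm [z0] [y]) (z :: L)) with (wcomm [z] [y] ++ D).
      change (z :: L) with ([z] ++ L). unfold D. free_group.
Qed.

Lemma wcomm_letters z y : fst z < m -> fst y < m -> exists q, in_gamma m 3 q /\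
  wcomm [z] [y] =~ winv_if (xorb (snd z) (snd y)) (wcomm (gen (fst z)) (gen (fst y))) ++ q.
Proof.
  intros Hz Hy. destruct z as [i [|]], y as [j [|]]; simpl in Hz, Hy; cbn [xorb winv_if fst snd];
    change [(i, true)] with (winv (gen i)); change [(j, true)] with (winv (gen j));
    change [(i, false)] with (gen i); change [(j, false)] with (gen j);
    pose proof (in_gamma_letters_wcomm (i, false) (j, false) Hz Hy) as Q2;
    assert (Hgi : in_RF m (gen i)) by auto with rf_words;
    assert (Hgj : in_RF m (gen j)) by auto with rf_words.
  - exists (wcomm (wcomm (gen i) (gen j)) (winv (gen i) ++ winv (gen j))).
    split; [apply in_gamma_wcomm_l; auto with rf_words | free_group].
  - exists (wcomm (winv (wcomm (gen i) (gen j))) (winv (gen i))).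
    split; [apply in_gamma_wcomm_l; [apply in_gamma_winv |]; auto with rf_words | free_group].
  - exists (wcomm (winv (wcomm (gen i) (gen j))) (winv (gen j))).
    split; [apply in_gamma_wcomm_l; [apply in_gamma_winv |]; auto with rf_words | free_group].
  - exists []. split; [apply in_gamma_nil|]. rewrite app_nil_r. reflexivity.
Qed.

Lemma basic_comms_split b i j v : i <= j -> j < m -> exists A B, in_RF m B /\
  basic_comms b = A ++ wpow (basic_comm i j) (b i j) ++ B /\
  basic_comms (update2 b i j v) = A ++ wpow (basic_comm i j) v ++ B.
Proof.
  intros Hij Hj.
  assert (Hp : In (i, j) (ordered_pairs m)) by (apply In_pairs; split; apply in_seq; lia).
  destruct (update2_split b (fun i j z => wpow (basic_comm i j) z) _ i j v
              (NoDup_pairs _ _ (seq_NoDup _ _) (fun _ => seq_NoDup _ _)) Hp) as [A [B [E1 E2]]].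
  cbv beta in E1, E2.
  exists A, B. split; [|split; auto].
  pose proof (in_RF_basic_comms b) as H. unfold basic_comms, ordered_pairs in H. rewrite E1 in H.
  apply in_RF_app_inv in H as [_ H]. apply in_RF_app_inv in H as [_ H]. exact H.
Qed.

(* Multiplying by [x_j, x_i]^(+-1) only changes its exponent, up to commutators of weight 3 with
   the later basic commutators. *)
Lemma basic_comms_app_ordered b i j s : i <= j -> j < m ->
  exists b' q, in_gamma m 3 q /\ basic_comms b ++ winv_if s (basic_comm i j) =~ basic_comms b' ++ q.
Proof.
  intros Hij Hj.
  set (v := if s then (b i j - 1)%Z else (b i j + 1)%Z).
  destruct (basic_comms_split b i j v Hij Hj) as [A [B [HB [E1 E2]]]].
  assert (Q2 : in_gamma m 2 (winv_if s (basic_comm i j)))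
    by (apply in_gamma_winv_if, in_gamma_basic_comm; simpl; lia).
  exists (update2 b i j v), (wcomm B (winv_if s (basic_comm i j))).
  split; [apply in_gamma_wcomm_r; auto|].
  rewrite E1, E2.
  transitivity (A ++ (wpow (basic_comm i j) (b i j) ++ winv_if s (basic_comm i j))
                  ++ B ++ wcomm B (winv_if s (basic_comm i j))); [free_group|].
  unfold v. destruct s; simpl; [rewrite wpow_pred_r | rewrite wpow_succ_r]; free_group.
Qed.

Lemma basic_comms_app_gen_wcomm b l k s : l < m -> k < m ->
  exists b' q, in_gamma m 3 q /\ basic_comms b ++ winv_if s (wcomm (gen l) (gen k)) =~ basic_comms b' ++ q.
Proof.
  intros Hl Hk. destruct (lt_eq_lt_dec k l) as [[H | H] | H].
  - apply basic_comms_app_ordered; lia.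
  - subst. exists b, []. split; [apply in_gamma_nil|].
    assert (E : winv_if s (wcomm (gen l) (gen l)) =~ []) by (destruct s; unfold winv_if; free_group).
    rewrite E, !app_nil_r. reflexivity.
  - destruct (basic_comms_app_ordered b l k (negb s) ltac:(lia) Hk) as [b' [q [Hq E]]].
    exists b', q. split; auto. rewrite <- E. unfold basic_comm; cbn [fst snd].
    destruct s; unfold winv_if, negb; free_group.
Qed.

Lemma basic_comms_app_letter_wcomms B y : in_RF m B -> fst y < m -> forall b, exists b' q,
  in_gamma m 3 q /\ basic_comms b ++ flat_map (fun z => wcomm [z] [y]) B =~ basic_comms b' ++ q.
Proof.
  intros HB Hy. induction HB as [|z B Hz HB IH]; intro b.
  - exists b, []. split; [apply in_gamma_nil | simpl; reflexivity].
  - destruct (wcomm_letters z y Hz Hy) as [q0 [Hq0 E0]].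
    destruct (basic_comms_app_gen_wcomm b (fst z) (fst y) (xorb (snd z) (snd y)) Hz Hy)
      as [b1 [q1 [Hq1 E1]]].
    destruct (IH b1) as [b2 [q2 [Hq2 E2]]].
    set (D := flat_map (fun z => wcomm [z] [y]) B).
    exists b2, (q2 ++ wconj (q1 ++ q0) D). split.
    + apply in_gamma_app; auto.
      apply in_gamma_wconj; [apply in_gamma_app; auto | apply in_RF_letter_wcomms; auto].
    + change (flat_map (fun z0 => wcomm [z0] [y]) (z :: B)) with (wcomm [z] [y] ++ D).
      rewrite E0.
      transitivity ((basic_comms b ++ winv_if (xorb (snd z) (snd y)) (wcomm (gen (fst z)) (gen (fst y))))
                      ++ q0 ++ D); [free_group|].
      rewrite E1.
      transitivity ((basic_comms b1 ++ D) ++ wconj (q1 ++ q0) D); [free_group|].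
      fold D in E2. rewrite E2. free_group.
Qed.

Lemma gen_powers_split a k a' : k < m -> exists A B, in_RF m B /\
  gen_powers a = A ++ wpow (gen k) (a k) ++ B /\ gen_powers (update1 a k a') = A ++ wpow (gen k) a' ++ B.
Proof.
  intro Hk. assert (Hin : In k (seq 0 m)) by (apply in_seq; lia).
  destruct (flat_map_update_split Nat.eq_dec (seq 0 m) k (fun i => wpow (gen i) (a i))
              (fun i => wpow (gen i) (update1 a k a' i)) (seq_NoDup _ _) Hin) as [A [B [E1 E2]]].
  - intros i Hi. unfold update1. destruct (i =? k) eqn:Ei; auto. apply Nat.eqb_eq in Ei; congruence.
  - exists A, B. split; [|split; auto].
    + pose proof (in_RF_gen_powers a) as H. unfold gen_powers in H. rewrite E1 in H.
      apply in_RF_app_inv in H as [_ H]. apply in_RF_app_inv in H as [_ H]. exact H.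
    + unfold gen_powers. rewrite E2. unfold update1. rewrite Nat.eqb_refl. reflexivity.
Qed.

(* Moving the new letter [y] left past the later generator powers [B] creates the commutators
   [D = [B, y]] of weight 2, which are then moved right past [C] into the basic commutators. *)
Lemma collect_letter a b q y : in_gamma m 3 q -> fst y < m -> exists a' b' q', in_gamma m 3 q' /\
  gen_powers a ++ basic_comms b ++ q ++ [y] =~ gen_powers a' ++ basic_comms b' ++ q'.
Proof.
  intros Hq Hy. set (k := fst y).
  set (a' := if snd y then (a k - 1)%Z else (a k + 1)%Z).
  destruct (gen_powers_split a k a' Hy) as [A [B [HB [E1 E2]]]].
  destruct (move_letter_left B y HB Hy) as [q1 [Hq1 EL]].
  set (D := flat_map (fun z => wcomm [z] [y]) B) in *.
  assert (HD : in_RF m D) by (apply in_RF_letter_wcomms; auto).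
  assert (QD : in_gamma m 2 D) by (apply in_gamma_letter_wcomms; auto).
  destruct (basic_comms_app_letter_wcomms B y HB Hy b) as [b' [q2 [Hq2 EC]]]. fold D in EC.
  set (C := basic_comms b) in *.
  assert (HC : in_RF m C) by apply in_RF_basic_comms.
  assert (QC : in_gamma m 2 C) by apply in_gamma_basic_comms.
  assert (HY : in_RF m [y]) by auto with rf_words.
  exists (update1 a k a'), b', (q2 ++ wcomm D C ++ wconj q1 C ++ wcomm C [y] ++ wconj q [y]). split.
  - apply in_gamma_app; [auto | apply in_gamma_app; [apply in_gamma_wcomm_l; auto |]].
    apply in_gamma_app; [apply in_gamma_wconj; auto |].
    apply in_gamma_app; [apply in_gamma_wcomm_l | apply in_gamma_wconj]; auto.
  - rewrite E1, E2.
    assert (EP : wpow (gen k) (a k) ++ [y] =~ wpow (gen k) a').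
    { unfold a', k. destruct y as [kk [|]]; simpl.
      - apply wpow_pred_r.
      - apply wpow_succ_r. }
    transitivity (A ++ wpow (gen k) (a k) ++ (B ++ [y]) ++ C ++ wcomm C [y] ++ wconj q [y]); [free_group|].
    rewrite EL.
    transitivity (A ++ (wpow (gen k) (a k) ++ [y]) ++ B ++ (C ++ D) ++ wcomm D C ++ wconj q1 C
                    ++ wcomm C [y] ++ wconj q [y]); [unfold D; free_group|].
    rewrite EP, EC. free_group.
Qed.

Lemma collect_mod_gamma3 z : in_RF m z ->
  exists a b q, in_gamma m 3 q /\ z =~ gen_powers a ++ basic_comms b ++ q.
Proof.
  induction z as [|y z IH] using rev_ind; intro Hz.
  - exists (fun _ => 0%Z), (fun _ _ => 0%Z), []. split; [apply in_gamma_nil|].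
    assert (Hnil : forall A (F : A -> word) l, (forall x, F x = []) -> flat_map F l = []).
    { intros A F l HF. induction l; simpl; rewrite ?HF; auto. }
    unfold gen_powers, basic_comms. rewrite !Hnil by reflexivity. reflexivity.
  - apply Forall_app in Hz as [Hz Hy]. inversion Hy as [|? ? Hy1 _]; subst.
    destruct (IH Hz) as [a [b [q [Hq E]]]].
    destruct (collect_letter a b q y Hq Hy1) as [a' [b' [q' [Hq' E']]]].
    exists a', b', q'. split; auto. rewrite E, <- E'. free_group.
Qed.

End Collection.

Theorem theorem5p1 (m : nat) (z : word) :
  in_RF m z ->
  exists (alpha : nat -> Z) (beta : nat -> nat -> Z) (omega : nat -> nat -> word),
    (forall i j, in_RF m (omega i j)) /\
    rf_eq m z (normal_form m alpha beta omega).
Proof.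
  intro Hz. destruct (collect_mod_gamma3 m z Hz) as [alpha [beta [q [Hq E]]]].
  destruct (gamma3_dcomm_prod m q Hq) as [omega [Homega Eq]].
  exists alpha, beta, omega. split; [exact Homega|].
  rewrite E, Eq. unfold normal_form, gen_powers, basic_comms, ordered_pairs, dcomm_prod, index_pairs.
  rewrite !flat_map_pairs. reflexivity.
Qed.
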